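(* Fix one of the types I–V with data $J$, $(\phi_j)$, $(n_j)$ as in the context, and let $H$ be continuous on $\mathbb{R}$. Let $i\in J$. Then there exists a unique local solution $\mathbf{x}(s)$ (defined for $s$ near $0$) of $$\mathbf{x}''(s)^\perp\cdot\mathbf{x}'(s)+\sum_{j\in J}\frac{n_j\,\mathbf{e}(\phi_j)\cdot\mathbf{x}'(s)}{\mathbf{e}(\phi_j)^\perp\cdot\mathbf{x}(s)}=(n-1)H(s),\qquad \|\mathbf{x}'(s)\|^2=1,$$ satisfying the initial conditions $$\mathbf{e}(\phi_i)^\perp\cdot\mathbf{x}(0)=0,\qquad \mathbf{x}(0)\neq\mathbf{0},\qquad \mathbf{x}'(0)=\mathbf{e}\!\left(\phi_i+\tfrac{\pi}{2}\right).$$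
   Context: For $\mathbf{a}=(a,b)\in\mathbb{R}^2$ write $\mathbf{a}^\perp=(-b,a)$; $\mathbf{e}(\phi)=(\cos\phi,\sin\phi)$, $\mathbf{e}(\phi)^\perp=(-\sin\phi,\cos\phi)$. Type data ($\sum_j n_j=n-2$): Type I: $J=\{0\}$, $\phi_0=0$, $n_0=n-2$, $n\ge3$. Type II: $J=\{0,1\}$, $\phi_0=0$, $\phi_1=\pi/2$, $n_0=m$, $n_1=\ell$ ($n=\ell+m+2$, $\ell,m\in\mathbb{N}$). Type III: $J=\{-1,0,1\}$, $\phi_j=j\pi/3$, $n_j\equiv c$ with $c\in\{1,2,4,8\}$ ($n=5,8,14,26$). Type IV: $J=\{-1,0,1,2\}$, $\phi_j=j\pi/4$, $n_{\pm1}=\ell$, $n_0=n_2=k$, $(k,\ell)\in\{(2,2),(5,4),(9,6),(m-2,1),(2m-3,2),(4m-5,4)\}$. Type V: $J=\{-2,\dots,3\}$, $\phi_j=j\pi/6$, $n_j\equiv c$ with $c\in\{1,2\}$. The equation is singular where $\mathbf{e}(\phi_j)^\perp\cdot\mathbf{x}=0$ for some $j$; the initial point lies on such a line. *)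

From Stdlib Require Import Reals Lra Lia List.
From Coquelicot Require Import Coquelicot.
Import ListNotations.
Open Scope R_scope.

Definition pt := (R * R)%type.
Definition dot (a b : pt) : R := fst a * fst b + snd a * snd b.
Definition perp (a : pt) : pt := (- snd a, fst a).
Definition e (phi : R) : pt := (cos phi, sin phi).

Definition dcurve (x : R -> pt) (t : R) : pt :=
  (Derive (fun u => fst (x u)) t, Derive (fun u => snd (x u)) t).

(* The data J, (phi_j), (n_j) of Types I--V, encoded as a list of pairs
   (phi_j, n_j), together with n (so that sum_j n_j = n - 2). *)
Inductive type_data : list (R * nat) -> nat -> Prop :=
| TypeI (n : nat) :
    (3 <= n)%nat -> type_data [(0, (n - 2)%nat)] n
| TypeII (l m : nat) :
    (1 <= l)%nat -> (1 <= m)%nat ->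
    type_data [(0, m); (PI / 2, l)] (l + m + 2)
| TypeIII (c : nat) :
    (c = 1 \/ c = 2 \/ c = 4 \/ c = 8)%nat ->
    type_data [(-1 * PI / 3, c); (0 * PI / 3, c); (1 * PI / 3, c)] (3 * c + 2)
| TypeIV (k l : nat) :
    ((k = 2 /\ l = 2) \/ (k = 5 /\ l = 4) \/ (k = 9 /\ l = 6) \/
     (exists m : nat, (1 <= k)%nat /\
        ((k = m - 2 /\ l = 1) \/ (k = 2 * m - 3 /\ l = 2) \/ (k = 4 * m - 5 /\ l = 4))))%nat ->
    type_data [(-1 * PI / 4, l); (0 * PI / 4, k); (1 * PI / 4, l); (2 * PI / 4, k)]
              (2 * k + 2 * l + 2)
| TypeV (c : nat) :
    (c = 1 \/ c = 2)%nat ->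
    type_data [(-2 * PI / 6, c); (-1 * PI / 6, c); (0 * PI / 6, c);
               (1 * PI / 6, c); (2 * PI / 6, c); (3 * PI / 6, c)] (6 * c + 2).

Definition sing_sum (J : list (R * nat)) (x v : pt) : R :=
  fold_right (fun p acc =>
    INR (snd p) * dot (e (fst p)) v / dot (perp (e (fst p))) x + acc) 0 J.

Definition C2_on (eps : R) (x : R -> pt) : Prop :=
  forall s, Rabs s < eps ->
    ex_derive (fun u => fst (x u)) s /\ ex_derive (fun u => snd (x u)) s /\
    ex_derive (fun u => fst (dcurve x u)) s /\ ex_derive (fun u => snd (dcurve x u)) s /\
    continuous (fun u => fst (dcurve (dcurve x) u)) s /\
    continuous (fun u => snd (dcurve (dcurve x) u)) s.

(* x is a C^2 solution on (-eps, eps) of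
     x''^perp . x' + sum_j n_j (e_j . x')/(e_j^perp . x) = (n-1) H(s),  |x'|^2 = 1,
   the ODE being required away from the singular time s = 0, where all the
   denominators are nonzero. *)
Definition is_local_solution (J : list (R * nat)) (n : nat) (H : R -> R)
    (eps : R) (x : R -> pt) : Prop :=
  0 < eps /\ C2_on eps x /\
  (forall s, Rabs s < eps -> dot (dcurve x s) (dcurve x s) = 1) /\
  (forall s, 0 < Rabs s < eps ->
     (forall p, In p J -> dot (perp (e (fst p))) (x s) <> 0) /\
     dot (perp (dcurve (dcurve x) s)) (dcurve x s) + sing_sum J (x s) (dcurve x s)
       = (INR n - 1) * H s).

From Stdlib Require Import Reals List Lra Lia.
From Coquelicot Require Import Coquelicot.
Open Scope R_scope.

(** Write [x' = e (phi_i + PI/2 + s b(s))] with [x(0)] on the line [e(phi_i)^perp . x = 0].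
    Along such a curve that denominator equals [s A(s)], [A(s) = (1/s) int_0^s cos (t b(t)) dt]
    being close to [1], so the singular term [j = i] becomes [- n_i sin (s b) / (s A)] and the
    equation turns into [(s^N . s b)' = s^N rhs(b)] with [N = n_i >= 1], that is, into the
    fixed-point problem [b(s) = s^-(N+1) int_0^s t^N rhs(b)(t) dt].  Since [b - sin (s b) / (s A)]
    is of second order in [s b], and the terms [j <> i] are regular near [x(0)] (the lines of a
    type are distinct and [x(0) <> 0]), [rhs] is Lipschitz with constant [O(d)] on continuous
    functions bounded on [(-d, d)].  For small [d] Picard iteration gives a solution; conversely
    every solution yields such a [b] through the angle of [x'] relative to [x'(0)], and the same
    contraction estimate gives uniqueness. *)

Lemma continuous_Rplus (f g : R -> R) x :
  continuous f x -> continuous g x -> continuous (fun t => f t + g t) x.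
Proof. exact (continuous_plus f g x). Qed.

Lemma continuous_Rmult (f g : R -> R) x :
  continuous f x -> continuous g x -> continuous (fun t => f t * g t) x.
Proof. exact (continuous_mult f g x). Qed.

Lemma continuous_Ropp (f : R -> R) x : continuous f x -> continuous (fun t => - f t) x.
Proof. exact (continuous_opp f x). Qed.

Lemma continuous_Rminus (f g : R -> R) x :
  continuous f x -> continuous g x -> continuous (fun t => f t - g t) x.
Proof. intros; apply continuous_Rplus; [|apply continuous_Ropp]; auto. Qed.

Lemma continuous_cos_comp (f : R -> R) x : continuous f x -> continuous (fun t => cos (f t)) x.
Proof. intros; apply continuous_comp; auto; apply continuity_pt_filterlim, continuity_cos. Qed.

Lemma continuous_sin_comp (f : R -> R) x : continuous f x -> continuous (fun t => sin (f t)) x.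
Proof. intros; apply continuous_comp; auto; apply continuity_pt_filterlim, continuity_sin. Qed.

Lemma continuous_Rdiv (f g : R -> R) x :
  continuous f x -> continuous g x -> g x <> 0 -> continuous (fun t => f t / g t) x.
Proof.
  intros Hf Hg Hg0; apply continuous_Rmult; auto.
  apply continuity_pt_filterlim, continuity_pt_inv; auto; now apply continuity_pt_filterlim.
Qed.

Lemma continuous_pow_comp (f : R -> R) (k : nat) x :
  continuous f x -> continuous (fun t => f t ^ k) x.
Proof. intros; induction k; simpl; [apply continuous_const | apply continuous_Rmult; auto]. Qed.

Lemma continuous_monomial k x : continuous (fun t => t ^ k) x.
Proof. apply continuous_pow_comp, continuous_id. Qed.

Lemma locally_of_ball (x r : R) (P : R -> Prop) :
  0 < r -> (forall y, Rabs (y - x) < r -> P y) -> locally x P.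
Proof. intros Hr HP; exists (mkposreal r Hr); exact HP. Qed.

Lemma locally_interval s r (P : R -> Prop) :
  Rabs s < r -> (forall y, Rabs y < r -> P y) -> locally s P.
Proof.
  intros Hs HP; apply (locally_of_ball s (r - Rabs s)); [lra|].
  intros y Hy; apply HP.
  replace y with ((y - s) + s) by ring; eapply Rle_lt_trans; [apply Rabs_triang | lra].
Qed.

Lemma locally_punctured s r (P : R -> Prop) :
  s <> 0 -> Rabs s < r -> (forall y, y <> 0 -> Rabs y < r -> P y) -> locally s P.
Proof.
  intros Hs0 Hs HP.
  apply (locally_of_ball s (Rmin (Rabs s) (r - Rabs s))).
  { apply Rmin_pos; [apply Rabs_pos_lt|]; lra. }
  intros y Hy; assert (Hm1 := Rmin_l (Rabs s) (r - Rabs s)); assert (Hm2 := Rmin_r (Rabs s) (r - Rabs s)).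
  apply HP.
  - intros ->; rewrite Rminus_0_l, Rabs_Ropp in Hy; lra.
  - replace y with ((y - s) + s) by ring; eapply Rle_lt_trans; [apply Rabs_triang | lra].
Qed.

Lemma continuous_of_eps_delta (f : R -> R) x :
  (forall eps, 0 < eps -> exists del, 0 < del /\
     forall y, Rabs (y - x) < del -> Rabs (f y - f x) <= eps) ->
  continuous f x.
Proof.
  intro Hed; apply continuity_pt_filterlim; intros eps Heps.
  destruct (Hed (eps / 2)) as [d [Hd Hy]]; [lra|].
  exists d; split; auto; intros y [_ Hy2]; simpl in *; unfold R_dist in *.
  specialize (Hy y Hy2); lra.
Qed.

Lemma continuous_eps_delta (f : R -> R) x : continuous f x ->
  forall eps, 0 < eps -> exists del, 0 < del /\
    forall y, Rabs (y - x) < del -> Rabs (f y - f x) <= eps.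
Proof.
  intros Hc eps Heps; apply continuity_pt_filterlim in Hc.
  destruct (Hc eps Heps) as [d [Hd Hy]]; exists d; split; auto.
  intros y Hyx; destruct (Req_dec y x) as [->|Hne].
  - rewrite Rminus_eq_0, Rabs_R0; lra.
  - left; apply (Hy y); repeat split; auto.
Qed.

Lemma continuous_eq_at_0 (f g : R -> R) r : 0 < r -> continuous f 0 -> continuous g 0 ->
  (forall y, 0 < Rabs y < r -> f y = g y) -> f 0 = g 0.
Proof.
  intros Hr Hf Hg Hfg; apply Rminus_diag_uniq, Rabs_eq_0.
  apply Rle_antisym; [|apply Rabs_pos].
  apply Rle_plus_epsilon; intros e He; rewrite Rplus_0_l.
  destruct (continuous_eps_delta f 0 Hf (e / 2)) as [d1 [Hd1 A1]]; [lra|].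
  destruct (continuous_eps_delta g 0 Hg (e / 2)) as [d2 [Hd2 A2]]; [lra|].
  set (y := Rmin (Rmin d1 d2) r / 2).
  assert (Hm := Rmin_l (Rmin d1 d2) r); assert (Hm2 := Rmin_r (Rmin d1 d2) r).
  assert (Hm3 := Rmin_l d1 d2); assert (Hm4 := Rmin_r d1 d2).
  assert (Hpos : 0 < Rmin (Rmin d1 d2) r) by (repeat apply Rmin_pos; auto).
  assert (Hy : Rabs y = y) by (apply Rabs_right; unfold y; lra).
  assert (B1 := A1 y ltac:(rewrite Rminus_0_r, Hy; unfold y; lra)).
  assert (B2 := A2 y ltac:(rewrite Rminus_0_r, Hy; unfold y; lra)).
  rewrite (Hfg y) in B1 by (rewrite Hy; unfold y; lra).
  replace (f 0 - g 0) with (- (g y - f 0) + (g y - g 0)) by ring.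
  eapply Rle_trans; [apply Rabs_triang|]; rewrite Rabs_Ropp; lra.
Qed.

Lemma Rabs_le_of_between_0 s t : Rmin 0 s <= t <= Rmax 0 s -> Rabs t <= Rabs s.
Proof.
  unfold Rmin, Rmax; destruct (Rle_dec 0 s); unfold Rabs; repeat destruct Rcase_abs; lra.
Qed.

Lemma ex_RInt_0_continuous (f : R -> R) s :
  (forall t, Rabs t <= Rabs s -> continuous f t) -> ex_RInt f 0 s.
Proof.
  intros Hc; apply (@ex_RInt_continuous R_CompleteNormedModule).
  intros z Hz; apply Hc, Rabs_le_of_between_0; exact Hz.
Qed.

Lemma abs_RInt_0_le (f : R -> R) s B : (forall t, Rabs t <= Rabs s -> continuous f t) ->
  (forall t, Rabs t <= Rabs s -> Rabs (f t) <= B) -> Rabs (RInt f 0 s) <= Rabs s * B.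
Proof.
  intros Hc Hb.
  assert (Hb' : forall t, Rmin 0 s <= t <= Rmax 0 s -> Rabs (f t) <= B)
    by (intros t Ht; apply Hb, Rabs_le_of_between_0, Ht).
  destruct (Rle_dec 0 s).
  - replace (Rabs s * B) with ((s - 0) * B) by (rewrite (Rabs_right s) by lra; ring).
    apply abs_RInt_le_const; auto; [apply ex_RInt_0_continuous; auto|].
    intros t Ht; apply Hb'; rewrite Rmin_left, Rmax_right; lra.
  - rewrite <- opp_RInt_swap by (apply ex_RInt_swap, ex_RInt_0_continuous; auto).
    change (Rabs (- RInt f s 0) <= Rabs s * B); rewrite Rabs_Ropp.
    replace (Rabs s * B) with ((0 - s) * B) by (rewrite (Rabs_left s) by lra; ring).
    apply abs_RInt_le_const; [lra | apply ex_RInt_swap, ex_RInt_0_continuous; auto |].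
    intros t Ht; apply Hb'; rewrite Rmin_right, Rmax_left; lra.
Qed.

Lemma abs_RInt_0_sub_le (f g : R -> R) s B :
  (forall t, Rabs t <= Rabs s -> continuous f t) ->
  (forall t, Rabs t <= Rabs s -> continuous g t) ->
  (forall t, Rabs t <= Rabs s -> Rabs (f t - g t) <= B) ->
  Rabs (RInt f 0 s - RInt g 0 s) <= Rabs s * B.
Proof.
  intros Hf Hg Hb.
  rewrite <- (@RInt_minus R_CompleteNormedModule) by (apply ex_RInt_0_continuous; auto).
  apply abs_RInt_0_le; auto; intros; apply continuous_Rminus; auto.
Qed.

Lemma RInt_monomial (k : nat) (s : R) : RInt (fun t => t ^ k) 0 s = s ^ S k / INR (S k).
Proof.
  apply is_RInt_unique.
  assert (Hc : INR (S k) <> 0) by (apply not_0_INR; lia).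
  replace (s ^ S k / INR (S k)) with (minus (s ^ S k / INR (S k)) (0 ^ S k / INR (S k)))
    by (unfold minus, plus, opp; simpl; field; auto).
  apply (is_RInt_derive (fun t => t ^ S k / INR (S k))).
  - intros x _; auto_derive; auto; rewrite S_INR in *; destruct k; simpl; field; auto.
  - intros; apply continuous_monomial.
Qed.

Lemma continuous_RInt_0 (g : R -> R) d s :
  (forall t, Rabs t < d -> continuous g t) -> Rabs s < d -> continuous (fun y => RInt g 0 y) s.
Proof.
  intros Hc Hs; apply (@ex_derive_continuous R_AbsRing R_NormedModule); exists (g s).
  apply (is_derive_RInt g (fun y => RInt g 0 y) 0 s); [|apply Hc; auto].
  apply (locally_interval s d); auto; intros y Hy.
  apply (@RInt_correct R_CompleteNormedModule), ex_RInt_0_continuous; intros t Ht; apply Hc; lra.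
Qed.

(** At [0], the limit of [s^-(k+1) int_0^s t^k f(t) dt] for continuous [f]. *)
Definition wavg (k : nat) (f : R -> R) (s : R) : R :=
  if Req_EM_T s 0 then f 0 / INR (S k) else RInt (fun t => t ^ k * f t) 0 s / s ^ S k.

Section WeightedAverage.
Variables (k : nat) (s : R).

Lemma continuous_monomial_mul (f : R -> R) : (forall t, Rabs t <= Rabs s -> continuous f t) ->
  forall t, Rabs t <= Rabs s -> continuous (fun t => t ^ k * f t) t.
Proof. intros Hc t Ht; apply continuous_Rmult; auto; apply continuous_monomial. Qed.

Lemma RInt_monomial_mul_sub (f : R -> R) c : (forall t, Rabs t <= Rabs s -> continuous f t) ->
  RInt (fun t => t ^ k * (f t - c)) 0 s =
  RInt (fun t => t ^ k * f t) 0 s - c * (s ^ S k / INR (S k)).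
Proof.
  intros Hc; rewrite <- RInt_monomial.
  assert (E1 : ex_RInt (fun t => t ^ k * f t) 0 s)
    by (apply ex_RInt_0_continuous, continuous_monomial_mul; auto).
  assert (E2 : ex_RInt (fun t => t ^ k) 0 s)
    by (apply ex_RInt_0_continuous; intros; apply continuous_monomial).
  rewrite (RInt_ext _ (fun t => minus (t ^ k * f t) (scal c (t ^ k))))
    by (intros; unfold minus, plus, opp, scal; simpl; unfold mult; simpl; ring).
  rewrite (@RInt_minus R_CompleteNormedModule), (@RInt_scal R_CompleteNormedModule); auto.
  apply (@ex_RInt_scal R_CompleteNormedModule); auto.
Qed.

Lemma wavg_sub_const_le (f : R -> R) c D : (forall t, Rabs t <= Rabs s -> continuous f t) ->
  (forall t, Rabs t <= Rabs s -> Rabs (f t - c) <= D) ->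
  Rabs (wavg k f s - c / INR (S k)) <= D.
Proof.
  intros Hc Hb.
  assert (HS : 1 <= INR (S k)) by (apply (le_INR 1); lia).
  assert (HD : 0 <= D) by (eapply Rle_trans; [apply Rabs_pos | apply Hb; rewrite Rabs_R0; apply Rabs_pos]).
  unfold wavg; destruct (Req_EM_T s 0) as [->|Hs].
  - replace (f 0 / INR (S k) - c / INR (S k)) with ((f 0 - c) / INR (S k)) by (field; lra).
    unfold Rdiv; rewrite Rabs_mult, Rabs_inv, (Rabs_right (INR _)) by lra.
    assert (H0 := Hb 0 (Rle_refl _)).
    apply Rle_trans with (D * / INR (S k)).
    + apply Rmult_le_compat_r; auto; left; apply Rinv_0_lt_compat; lra.
    + rewrite <- (Rmult_1_r D) at 2; apply Rmult_le_compat_l; auto.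
      rewrite <- Rinv_1; apply Rinv_le_contravar; lra.
  - assert (Has : 0 < Rabs s) by (apply Rabs_pos_lt; auto).
    replace (RInt (fun t => t ^ k * f t) 0 s / s ^ S k - c / INR (S k))
      with (RInt (fun t => t ^ k * (f t - c)) 0 s / s ^ S k)
      by (rewrite RInt_monomial_mul_sub; auto; field; split; [lra | apply pow_nonzero; auto]).
    unfold Rdiv; rewrite Rabs_mult, Rabs_inv, <- RPow_abs.
    apply Rle_trans with ((Rabs s * (Rabs s ^ k * D)) * / Rabs s ^ S k).
    + apply Rmult_le_compat_r; [left; apply Rinv_0_lt_compat, pow_lt; auto|].
      apply abs_RInt_0_le.
      * apply continuous_monomial_mul; auto; intros t Ht.
        apply continuous_Rminus; [auto | apply continuous_const].
      * intros t Ht; rewrite Rabs_mult, <- RPow_abs.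
        apply Rmult_le_compat; auto; try apply Rabs_pos; [apply pow_le, Rabs_pos|].
        apply pow_incr; split; auto; apply Rabs_pos.
    + right; simpl; field; split; [apply pow_nonzero|]; lra.
Qed.

Lemma wavg_sub (f g : R -> R) : (forall t, Rabs t <= Rabs s -> continuous f t) ->
  (forall t, Rabs t <= Rabs s -> continuous g t) ->
  wavg k f s - wavg k g s = wavg k (fun t => f t - g t) s.
Proof.
  intros Hf Hg; unfold wavg; destruct (Req_EM_T s 0).
  - field; apply not_0_INR; lia.
  - assert (E : RInt (fun t => t ^ k * (f t - g t)) 0 s
                 = RInt (fun t => t ^ k * f t) 0 s - RInt (fun t => t ^ k * g t) 0 s).
    { rewrite <- (@RInt_minus R_CompleteNormedModule)
        by (apply ex_RInt_0_continuous, continuous_monomial_mul; auto).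
      apply RInt_ext; intros; unfold minus, plus, opp; simpl; ring. }
    rewrite E; field; apply pow_nonzero; auto.
Qed.

End WeightedAverage.

Lemma continuous_wavg (f : R -> R) k d s :
  (forall t, Rabs t < d -> continuous f t) -> Rabs s < d -> continuous (wavg k f) s.
Proof.
  intros Hc Hs; destruct (Req_dec s 0) as [->|Hs0].
  - apply continuous_of_eps_delta; intros eps Heps.
    destruct (continuous_eps_delta f 0 (Hc 0 Hs) eps Heps) as [del [Hdel Hy]].
    exists (Rmin del d); split; [apply Rmin_pos; auto; rewrite Rabs_R0 in Hs; lra|].
    intros y Hy0; rewrite Rminus_0_r in Hy0.
    assert (Hm1 := Rmin_l del d); assert (Hm2 := Rmin_r del d).
    unfold wavg at 2; destruct (Req_EM_T 0 0); [|congruence].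
    apply wavg_sub_const_le; [intros t Ht; apply Hc; lra|].
    intros t Ht; apply Hy; rewrite Rminus_0_r; lra.
  - apply (continuous_ext_loc _ (fun y => RInt (fun t => t ^ k * f t) 0 y / y ^ S k)).
    + apply (locally_punctured s d); auto; intros y Hy0 _.
      unfold wavg; destruct (Req_EM_T y 0); [contradiction | reflexivity].
    + apply continuous_Rdiv; [| apply continuous_monomial | apply pow_nonzero; auto].
      apply (continuous_RInt_0 _ d); auto; intros; apply continuous_Rmult; auto.
      apply continuous_monomial.
Qed.

Definition cont_bounded (d M : R) (b : R -> R) : Prop :=
  forall t, Rabs t < d -> continuous b t /\ Rabs (b t) <= M.

Definition close_on (d D : R) (b1 b2 : R -> R) : Prop :=
  forall t, Rabs t < d -> Rabs (b1 t - b2 t) <= D.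

Lemma cont_bounded_0 d M : 0 <= M -> cont_bounded d M (fun _ => 0).
Proof. intros HM t Ht; split; [apply continuous_const | rewrite Rabs_R0; auto]. Qed.

Lemma cont_bounded_nonneg d M b s : cont_bounded d M b -> Rabs s < d -> 0 <= M.
Proof. intros Hb Hs; eapply Rle_trans; [apply Rabs_pos | apply (Hb s Hs)]. Qed.

Lemma close_on_nonneg d D b1 b2 s : close_on d D b1 b2 -> Rabs s < d -> 0 <= D.
Proof. intros HD Hs; eapply Rle_trans; [apply Rabs_pos | apply (HD s Hs)]. Qed.

Lemma cont_bounded_close d M b1 b2 :
  cont_bounded d M b1 -> cont_bounded d M b2 -> close_on d (2 * M) b1 b2.
Proof.
  intros H1 H2 t Ht; destruct (H1 t Ht) as [_ A]; destruct (H2 t Ht) as [_ B].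
  eapply Rle_trans; [apply Rabs_triang|]; rewrite Rabs_Ropp; lra.
Qed.

Lemma exists_half_pow_lt (C eps : R) : 0 < eps -> exists k, C * (/2) ^ k < eps.
Proof.
  intros He; destruct (Rle_dec C 0); [exists 0%nat; simpl; lra|].
  destruct (pow_lt_1_zero (/2) ltac:(rewrite Rabs_right; lra) (eps / C)) as [k Hk];
    [apply Rdiv_lt_0_compat; lra|].
  exists k; specialize (Hk k (le_n _)); rewrite Rabs_right in Hk by (apply Rle_ge, pow_le; lra).
  apply (Rmult_lt_compat_l C) in Hk; [|lra].
  replace (C * (eps / C)) with eps in Hk by (field; lra); exact Hk.
Qed.

Lemma le_0_of_le_half_pow (x C : R) : (forall k, x <= C * (/2) ^ k) -> x <= 0.
Proof.
  intros H; apply Rle_plus_epsilon; intros eps He; rewrite Rplus_0_l.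
  destruct (exists_half_pow_lt C eps He) as [k Hk]; specialize (H k); lra.
Qed.

Lemma eq_of_close_half_pow (u v C : R) : (forall k, Rabs (u - v) <= C * (/2) ^ k) -> u = v.
Proof.
  intros H; apply Rminus_diag_uniq, Rabs_eq_0, Rle_antisym; [|apply Rabs_pos].
  apply (le_0_of_le_half_pow _ C), H.
Qed.

Lemma continuous_of_uniform_approx d (b : R -> R) (f : nat -> R -> R) C :
  (forall k t, Rabs t < d -> continuous (f k) t) ->
  (forall k, close_on d (C * (/2) ^ k) b (f k)) ->
  forall t, Rabs t < d -> continuous b t.
Proof.
  intros Hf Hb t Ht; apply continuous_of_eps_delta; intros eps He.
  destruct (exists_half_pow_lt C (eps / 3)) as [k Hk]; [lra|].
  destruct (continuous_eps_delta (f k) t (Hf k t Ht) (eps / 3)) as [del [Hdel Hy]]; [lra|].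
  exists (Rmin del (d - Rabs t)); split; [apply Rmin_pos; lra|].
  intros y Hyt; assert (Hm1 := Rmin_l del (d - Rabs t)); assert (Hm2 := Rmin_r del (d - Rabs t)).
  assert (Hyd : Rabs y < d)
    by (replace y with ((y - t) + t) by ring; eapply Rle_lt_trans; [apply Rabs_triang | lra]).
  assert (A := Hb k y Hyd); assert (B := Hb k t Ht); assert (D := Hy y ltac:(lra)).
  replace (b y - b t) with ((b y - f k y) + (f k y - f k t) - (b t - f k t)) by ring.
  eapply Rle_trans; [apply Rabs_triang|]; rewrite Rabs_Ropp.
  eapply Rle_trans; [apply Rplus_le_compat_r, Rabs_triang | lra].
Qed.

Section Contraction.
Variables (d M : R) (T : (R -> R) -> (R -> R)).
Hypothesis T_contracts : forall b1 b2 D, cont_bounded d M b1 -> cont_bounded d M b2 ->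
  close_on d D b1 b2 -> close_on d (D / 2) (T b1) (T b2).

Lemma contraction_fixed_point_unique b1 b2 : cont_bounded d M b1 -> cont_bounded d M b2 ->
  (forall t, Rabs t < d -> T b1 t = b1 t) -> (forall t, Rabs t < d -> T b2 t = b2 t) ->
  forall t, Rabs t < d -> b1 t = b2 t.
Proof.
  intros H1 H2 F1 F2.
  assert (Hk : forall k, close_on d (2 * M * (/2) ^ k) b1 b2).
  { induction k; intros t Ht.
    - rewrite pow_O, Rmult_1_r; exact (cont_bounded_close _ _ _ _ H1 H2 t Ht).
    - rewrite <- (F1 t Ht), <- (F2 t Ht).
      replace (2 * M * (/2) ^ S k) with (2 * M * (/2) ^ k / 2) by (simpl; field).
      apply T_contracts; auto. }
  intros t Ht; apply (eq_of_close_half_pow _ _ (2 * M)); intros k; apply Hk, Ht.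
Qed.

Hypothesis T_maps : forall b, cont_bounded d M b -> cont_bounded d M (T b).
Hypothesis M_nonneg : 0 <= M.

Let picard (k : nat) : R -> R := Nat.iter k T (fun _ => 0).

Lemma cont_bounded_picard k : cont_bounded d M (picard k).
Proof. induction k; simpl; auto; apply cont_bounded_0, M_nonneg. Qed.

Lemma picard_step_le k : close_on d (2 * M * (/2) ^ k) (picard (S k)) (picard k).
Proof.
  induction k as [|k IH]; intros t Ht.
  - rewrite pow_O, Rmult_1_r.
    exact (cont_bounded_close _ _ _ _ (cont_bounded_picard 1) (cont_bounded_picard 0) t Ht).
  - replace (2 * M * (/ 2) ^ S k) with ((2 * M * (/ 2) ^ k) / 2) by (simpl; field).
    apply T_contracts; auto using cont_bounded_picard.
Qed.

Lemma picard_gap_le k m : (k <= m)%nat -> close_on d (4 * M * (/2) ^ k) (picard m) (picard k).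
Proof.
  intros Hkm t Ht.
  assert (Hgap : forall j, Rabs (picard (k + j) t - picard k t)
                             <= 4 * M * (/2) ^ k - 4 * M * (/2) ^ (k + j)).
  { induction j as [|j IH].
    - rewrite Nat.add_0_r, Rminus_eq_0, Rabs_R0; lra.
    - rewrite Nat.add_succ_r.
      replace (picard (S (k + j)) t - picard k t)
        with ((picard (S (k + j)) t - picard (k + j) t) + (picard (k + j) t - picard k t)) by ring.
      eapply Rle_trans; [apply Rabs_triang|].
      assert (A := picard_step_le (k + j) t Ht); simpl pow; lra. }
  replace m with (k + (m - k))%nat by lia.
  eapply Rle_trans; [apply Hgap|].
  assert (0 <= 4 * M * (/2) ^ (k + (m - k))) by (apply Rmult_le_pos; [lra | apply pow_le; lra]).
  lra.
Qed.

Lemma picard_limit : exists b, forall k, close_on d (4 * M * (/2) ^ k) b (picard k).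
Proof.
  assert (Hcv : forall t, Rabs t < d -> ex_finite_lim_seq (fun k => picard k t)).
  { intros t Ht; apply ex_lim_seq_cauchy_corr; intros eps.
    destruct (exists_half_pow_lt (8 * M) eps (cond_pos eps)) as [N HN].
    exists N; intros p q Hp Hq.
    replace (picard p t - picard q t) with ((picard p t - picard N t) - (picard q t - picard N t)) by ring.
    assert (A := picard_gap_le N p Hp t Ht); assert (B := picard_gap_le N q Hq t Ht).
    eapply Rle_lt_trans; [apply Rabs_triang|]; rewrite Rabs_Ropp; lra. }
  exists (fun t => real (Lim_seq (fun k => picard k t))); intros k t Ht.
  assert (L := Lim_seq_correct' _ (Hcv t Ht)); apply is_lim_seq_spec in L.
  set (b := real (Lim_seq (fun k => picard k t))) in *.
  apply Rle_plus_epsilon; intros eps He.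
  destruct (L (mkposreal eps He)) as [N HN]; simpl in HN.
  specialize (HN (max N k) (Nat.le_max_l _ _)).
  assert (A := picard_gap_le k (max N k) (Nat.le_max_r _ _) t Ht).
  replace (b - picard k t) with (- (picard (max N k) t - b) + (picard (max N k) t - picard k t)) by ring.
  eapply Rle_trans; [apply Rabs_triang|]; rewrite Rabs_Ropp; lra.
Qed.

Lemma contraction_fixed_point :
  exists b, cont_bounded d M b /\ forall t, Rabs t < d -> T b t = b t.
Proof.
  destruct picard_limit as [b Hb].
  assert (Hbs : cont_bounded d M b).
  { intros t Ht; split.
    - apply (continuous_of_uniform_approx d b picard (4 * M)); auto.
      intros k t' Ht'; apply cont_bounded_picard; auto.
    - apply Rminus_le, (le_0_of_le_half_pow _ (4 * M)); intros k.
      assert (A := Hb k t Ht); destruct (cont_bounded_picard k t Ht) as [_ B].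
      assert (C := Rabs_triang (b t - picard k t) (picard k t)).
      replace (b t - picard k t + picard k t) with (b t) in C by ring; lra. }
  exists b; split; auto; intros t Ht.
  apply (eq_of_close_half_pow _ _ (4 * M)); intros k.
  assert (A := T_contracts b (picard k) _ Hbs (cont_bounded_picard k) (Hb k) t Ht).
  assert (B := Hb (S k) t Ht); change (picard (S k)) with (T (picard k)) in B.
  replace (T b t - b t) with ((T b t - T (picard k) t) - (b t - T (picard k) t)) by ring.
  eapply Rle_trans; [apply Rabs_triang|]; rewrite Rabs_Ropp; simpl pow in B; lra.
Qed.

End Contraction.

Lemma Rabs_sub_le_MVT (f df : R -> R) a b B :
  (forall x, is_derive f x (df x)) -> (forall x, continuity_pt f x) ->
  (forall c, Rmin a b <= c <= Rmax a b -> Rabs (df c) <= B) ->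
  Rabs (f a - f b) <= B * Rabs (a - b).
Proof.
  intros Hd Hc Hb; destruct (MVT_gen f b a df) as [c [Hc1 Hc2]]; auto.
  rewrite Hc2, Rabs_mult; apply Rmult_le_compat_r; [apply Rabs_pos|]; apply Hb.
  unfold Rmin, Rmax in *; destruct (Rle_dec a b), (Rle_dec b a); lra.
Qed.

Lemma Rabs_cos_le_1 x : Rabs (cos x) <= 1.
Proof. apply Rabs_le, COS_bound. Qed.

Lemma Rabs_sin_le_1 x : Rabs (sin x) <= 1.
Proof. apply Rabs_le, SIN_bound. Qed.

Lemma sin_lipschitz a b : Rabs (sin a - sin b) <= Rabs (a - b).
Proof.
  rewrite <- (Rmult_1_l (Rabs (a - b))); apply (Rabs_sub_le_MVT sin cos).
  - intros; auto_derive; auto; ring.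
  - intros; apply continuity_sin.
  - intros; apply Rabs_cos_le_1.
Qed.

Lemma cos_lipschitz a b : Rabs (cos a - cos b) <= Rabs (a - b).
Proof.
  rewrite <- (Rmult_1_l (Rabs (a - b))); apply (Rabs_sub_le_MVT cos (fun x => - sin x)).
  - intros; auto_derive; auto; ring.
  - intros; apply continuity_cos.
  - intros; rewrite Rabs_Ropp; apply Rabs_sin_le_1.
Qed.

Lemma Rabs_sin_le z : Rabs (sin z) <= Rabs z.
Proof. assert (A := sin_lipschitz z 0); rewrite sin_0, !Rminus_0_r in A; exact A. Qed.

Lemma Rabs_cos_sub_1_le z : Rabs (cos z - 1) <= Rabs z.
Proof. assert (A := cos_lipschitz z 0); rewrite cos_0, !Rminus_0_r in A; exact A. Qed.

Lemma id_sub_sin_lipschitz a b B : Rabs a <= B -> Rabs b <= B ->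
  Rabs ((a - sin a) - (b - sin b)) <= B * Rabs (a - b).
Proof.
  intros Ha Hb; apply (Rabs_sub_le_MVT (fun z => z - sin z) (fun z => 1 - cos z)).
  - intros; auto_derive; auto; ring.
  - intros; apply continuity_pt_minus; [apply continuity_pt_id | apply continuity_sin].
  - intros c Hc; rewrite <- Rabs_Ropp; replace (- (1 - cos c)) with (cos c - 1) by ring.
    eapply Rle_trans; [apply Rabs_cos_sub_1_le|]; unfold Rmin, Rmax in Hc.
    revert Ha Hb; destruct (Rle_dec a b); unfold Rabs; repeat destruct Rcase_abs; intros; lra.
Qed.

Lemma sin_cos_pow2 x : sin x ^ 2 + cos x ^ 2 = 1.
Proof. assert (A := sin2_cos2 x); unfold Rsqr in A; simpl; lra. Qed.

Lemma perp_dot_rotated phi p : dot (perp (e phi)) (e (phi + PI / 2 + p)) = cos p.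
Proof.
  unfold dot, perp, e; simpl.
  replace (phi + PI / 2 + p) with ((phi + p) + PI / 2) by ring.
  rewrite (cos_plus (phi + p)), (sin_plus (phi + p)), cos_PI2, sin_PI2, (cos_plus phi p), (sin_plus phi p).
  transitivity ((sin phi ^ 2 + cos phi ^ 2) * cos p); [ring | rewrite sin_cos_pow2; ring].
Qed.

Lemma dot_rotated phi p : dot (e phi) (e (phi + PI / 2 + p)) = - sin p.
Proof.
  unfold dot, e; simpl.
  replace (phi + PI / 2 + p) with ((phi + p) + PI / 2) by ring.
  rewrite (cos_plus (phi + p)), (sin_plus (phi + p)), cos_PI2, sin_PI2, (cos_plus phi p), (sin_plus phi p).
  transitivity (- (sin phi ^ 2 + cos phi ^ 2) * sin p); [ring | rewrite sin_cos_pow2; ring].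
Qed.

Lemma perp_dot_normal a t : dot (perp (- sin a * t, cos a * t)) (e a) = - t.
Proof.
  unfold dot, perp, e; simpl.
  transitivity (- t * (sin a ^ 2 + cos a ^ 2)); [ring | rewrite sin_cos_pow2; ring].
Qed.

Lemma perp_dot_through_line phi x0 psi : dot (perp (e phi)) x0 = 0 ->
  dot (perp (e psi)) x0 = dot (e phi) x0 * sin (phi - psi).
Proof.
  unfold dot, perp, e; simpl; intros H0; rewrite sin_minus.
  assert (Hsc := sin_cos_pow2 phi).
  set (c := cos phi * fst x0 + sin phi * snd x0).
  assert (E1 : fst x0 = cos phi * c).
  { transitivity (fst x0 * (sin phi ^ 2 + cos phi ^ 2)
                  + sin phi * (- sin phi * fst x0 + cos phi * snd x0)); [rewrite H0, Hsc; ring | unfold c; ring]. }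
  assert (E2 : snd x0 = sin phi * c).
  { transitivity (snd x0 * (sin phi ^ 2 + cos phi ^ 2)
                  - cos phi * (- sin phi * fst x0 + cos phi * snd x0)); [rewrite H0, Hsc; ring | unfold c; ring]. }
  clearbody c; rewrite E1, E2; ring.
Qed.

Lemma dot_e_on_line_neq_0 phi x0 :
  dot (perp (e phi)) x0 = 0 -> x0 <> (0, 0) -> dot (e phi) x0 <> 0.
Proof.
  unfold dot, perp, e; simpl; intros H0 Hne Hc; apply Hne.
  destruct x0 as [a b]; simpl in *; assert (Hsc := sin_cos_pow2 phi).
  assert (Ea : a = cos phi * (cos phi * a + sin phi * b) - sin phi * (- sin phi * a + cos phi * b))
    by (transitivity (a * (sin phi ^ 2 + cos phi ^ 2)); [rewrite Hsc; ring | ring]).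
  assert (Eb : b = sin phi * (cos phi * a + sin phi * b) + cos phi * (- sin phi * a + cos phi * b))
    by (transitivity (b * (sin phi ^ 2 + cos phi ^ 2)); [rewrite Hsc; ring | ring]).
  rewrite Hc, H0 in Ea, Eb; f_equal; lra.
Qed.

Definition near_pt (x0 : pt) (r : R) (x : pt) : Prop :=
  Rabs (fst x - fst x0) <= r /\ Rabs (snd x - snd x0) <= r.

Definition unit_box (v : pt) : Prop := Rabs (fst v) <= 1 /\ Rabs (snd v) <= 1.

Definition away_from_lines (K : list (R * nat)) (x0 : pt) (m : R) : Prop :=
  forall p, In p K -> m <= Rabs (dot (perp (e (fst p))) x0).

Definition sum_mult (K : list (R * nat)) : R := fold_right (fun p a => INR (snd p) + a) 0 K.

Lemma sum_mult_nonneg K : 0 <= sum_mult K.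
Proof. induction K as [|p K IH]; simpl; [lra | assert (A := pos_INR (snd p)); lra]. Qed.

Lemma near_pt_mono x0 r1 r2 x : near_pt x0 r1 x -> r1 <= r2 -> near_pt x0 r2 x.
Proof. intros [A B] Hr; split; lra. Qed.

Lemma unit_box_e a : unit_box (e a).
Proof. split; simpl; [apply Rabs_cos_le_1 | apply Rabs_sin_le_1]. Qed.

Lemma exists_away_from_lines K x0 :
  (forall p, In p K -> dot (perp (e (fst p))) x0 <> 0) -> exists m, 0 < m /\ away_from_lines K x0 m.
Proof.
  induction K as [|p K IH]; intros HK; [exists 1; split; [lra | intros q []]|].
  destruct IH as [m [Hm Hg]]; [intros; apply HK; right; auto|].
  assert (Hp : 0 < Rabs (dot (perp (e (fst p))) x0)) by (apply Rabs_pos_lt, HK; left; auto).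
  exists (Rmin m (Rabs (dot (perp (e (fst p))) x0))); split; [apply Rmin_pos; auto|].
  intros q [<-|Hq]; [apply Rmin_r | eapply Rle_trans; [apply Rmin_l | apply Hg; auto]].
Qed.

Lemma Rabs_lincomb_le a b c d r1 r2 : Rabs a <= 1 -> Rabs b <= 1 -> Rabs c <= r1 -> Rabs d <= r2 ->
  Rabs (a * c + b * d) <= r1 + r2.
Proof.
  intros; eapply Rle_trans; [apply Rabs_triang|]; rewrite !Rabs_mult.
  assert (Rabs a * Rabs c <= 1 * r1) by (apply Rmult_le_compat; auto; apply Rabs_pos).
  assert (Rabs b * Rabs d <= 1 * r2) by (apply Rmult_le_compat; auto; apply Rabs_pos).
  lra.
Qed.

Lemma perp_dot_sub_le phi x1 x2 r : Rabs (fst x1 - fst x2) <= r -> Rabs (snd x1 - snd x2) <= r ->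
  Rabs (dot (perp (e phi)) x1 - dot (perp (e phi)) x2) <= 2 * r.
Proof.
  intros; unfold dot, perp, e; simpl.
  replace (- sin phi * fst x1 + cos phi * snd x1 - (- sin phi * fst x2 + cos phi * snd x2))
    with ((- sin phi) * (fst x1 - fst x2) + cos phi * (snd x1 - snd x2)) by ring.
  replace (2 * r) with (r + r) by ring; apply Rabs_lincomb_le; auto;
    [rewrite Rabs_Ropp; apply Rabs_sin_le_1 | apply Rabs_cos_le_1].
Qed.

Lemma e_dot_sub_le phi v1 v2 r : Rabs (fst v1 - fst v2) <= r -> Rabs (snd v1 - snd v2) <= r ->
  Rabs (dot (e phi) v1 - dot (e phi) v2) <= 2 * r.
Proof.
  intros; unfold dot, e; simpl.
  replace (cos phi * fst v1 + sin phi * snd v1 - (cos phi * fst v2 + sin phi * snd v2))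
    with (cos phi * (fst v1 - fst v2) + sin phi * (snd v1 - snd v2)) by ring.
  replace (2 * r) with (r + r) by ring; apply Rabs_lincomb_le; auto;
    [apply Rabs_cos_le_1 | apply Rabs_sin_le_1].
Qed.

Lemma Rabs_e_dot_le phi v : unit_box v -> Rabs (dot (e phi) v) <= 2.
Proof.
  intros [H1 H2]; unfold dot, e; simpl; replace 2 with (1 + 1) by ring.
  apply Rabs_lincomb_le; auto; [apply Rabs_cos_le_1 | apply Rabs_sin_le_1].
Qed.

Lemma perp_dot_lower_bound phi x0 x m r : m <= Rabs (dot (perp (e phi)) x0) ->
  near_pt x0 r x -> r <= m / 4 -> m / 2 <= Rabs (dot (perp (e phi)) x).
Proof.
  intros Hm [H1 H2] Hr; assert (A := perp_dot_sub_le phi x x0 r H1 H2).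
  assert (B := Rabs_triang_inv (dot (perp (e phi)) x0) (dot (perp (e phi)) x)).
  rewrite <- Rabs_Ropp, Ropp_minus_distr in A; lra.
Qed.

Lemma Rinv_Rabs_le q m : 0 < m -> m / 2 <= Rabs q -> / Rabs q <= 2 / m.
Proof.
  intros Hm Hq; replace (2 / m) with (/ (m / 2)) by (field; lra); apply Rinv_le_contravar; lra.
Qed.

Lemma Rabs_div_le p q m : 0 < m -> Rabs p <= 2 -> m / 2 <= Rabs q -> Rabs (p / q) <= 4 / m.
Proof.
  intros Hm Hp Hq; unfold Rdiv; rewrite Rabs_mult, Rabs_inv.
  replace (4 * / m) with (2 * (2 / m)) by (field; lra).
  apply Rmult_le_compat; auto; [apply Rabs_pos | left; apply Rinv_0_lt_compat; lra | apply Rinv_Rabs_le; auto].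
Qed.

Lemma div_lipschitz p1 p2 q1 q2 m dl : 0 < m -> Rabs p2 <= 2 ->
  m / 2 <= Rabs q1 -> m / 2 <= Rabs q2 -> Rabs (p1 - p2) <= 2 * dl -> Rabs (q1 - q2) <= 2 * dl ->
  Rabs (p1 / q1 - p2 / q2) <= (4 / m + 16 / (m * m)) * dl.
Proof.
  intros Hm Hp2 H1 H2 Hpd Hqd.
  assert (q1 <> 0) by (intro Z; rewrite Z, Rabs_R0 in H1; lra).
  assert (q2 <> 0) by (intro Z; rewrite Z, Rabs_R0 in H2; lra).
  replace (p1 / q1 - p2 / q2) with ((p1 - p2) * / q1 + p2 * (q2 - q1) * (/ q1 * / q2)) by (field; auto).
  eapply Rle_trans; [apply Rabs_triang|]; rewrite !Rabs_mult, !Rabs_inv.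
  assert (I1 := Rinv_Rabs_le q1 m Hm H1); assert (I2 := Rinv_Rabs_le q2 m Hm H2).
  assert (Hdl : 0 <= dl) by (assert (Z := Rabs_pos (p1 - p2)); lra).
  assert (Hi1 : 0 <= / Rabs q1) by (left; apply Rinv_0_lt_compat, Rabs_pos_lt; auto).
  assert (Hi2 : 0 <= / Rabs q2) by (left; apply Rinv_0_lt_compat, Rabs_pos_lt; auto).
  assert (P1 : Rabs (p1 - p2) * / Rabs q1 <= (2 * dl) * (2 / m))
    by (apply Rmult_le_compat; auto; apply Rabs_pos).
  assert (P2 : Rabs p2 * Rabs (q2 - q1) * (/ Rabs q1 * / Rabs q2) <= 2 * (2 * dl) * ((2 / m) * (2 / m))).
  { apply Rmult_le_compat; [apply Rmult_le_pos; apply Rabs_pos | apply Rmult_le_pos; auto | |].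
    - apply Rmult_le_compat; auto; try apply Rabs_pos; rewrite <- Rabs_Ropp, Ropp_minus_distr; auto.
    - apply Rmult_le_compat; auto. }
  replace ((4 / m + 16 / (m * m)) * dl) with ((2 * dl) * (2 / m) + 2 * (2 * dl) * ((2 / m) * (2 / m)))
    by (field; lra).
  lra.
Qed.

Section RegularTerms.
Variables (K : list (R * nat)) (x0 : pt) (m r : R).
Hypotheses (Hm : 0 < m) (HK : away_from_lines K x0 m) (Hr : r <= m / 4).

Lemma Rabs_sing_sum_le x v : near_pt x0 r x -> unit_box v ->
  Rabs (sing_sum K x v) <= sum_mult K * (4 / m).
Proof.
  intros Hn Hv; induction K as [|p K' IH]; simpl; [rewrite Rabs_R0; lra|].
  fold (sing_sum K' x v).
  assert (IH' := IH (fun q Hq => HK q (or_intror Hq))).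
  assert (Q : Rabs (dot (e (fst p)) v / dot (perp (e (fst p))) x) <= 4 / m).
  { apply Rabs_div_le; auto; [apply Rabs_e_dot_le; auto|].
    eapply perp_dot_lower_bound; eauto; apply HK; left; auto. }
  eapply Rle_trans; [apply Rabs_triang|].
  unfold Rdiv in *; rewrite Rmult_assoc, Rabs_mult, (Rabs_right (INR _)) by (apply Rle_ge, pos_INR).
  assert (INR (snd p) * Rabs (dot (e (fst p)) v * / dot (perp (e (fst p))) x) <= INR (snd p) * (4 * / m))
    by (apply Rmult_le_compat_l; auto; apply pos_INR).
  nra.
Qed.

Lemma sing_sum_lipschitz x1 x2 v1 v2 dl : near_pt x0 r x1 -> near_pt x0 r x2 ->
  unit_box v1 -> unit_box v2 ->
  Rabs (fst x1 - fst x2) <= dl -> Rabs (snd x1 - snd x2) <= dl ->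
  Rabs (fst v1 - fst v2) <= dl -> Rabs (snd v1 - snd v2) <= dl ->
  Rabs (sing_sum K x1 v1 - sing_sum K x2 v2) <= sum_mult K * (4 / m + 16 / (m * m)) * dl.
Proof.
  intros Hn1 Hn2 Hv1 Hv2 Dx1 Dx2 Dv1 Dv2.
  assert (Hdl : 0 <= dl) by (assert (Z := Rabs_pos (fst x1 - fst x2)); lra).
  induction K as [|p K' IH]; simpl; [rewrite Rminus_0_r, Rabs_R0; lra|].
  fold (sing_sum K' x1 v1) (sing_sum K' x2 v2).
  assert (IH' := IH (fun q Hq => HK q (or_intror Hq))).
  set (A := dot (e (fst p)) v1 / dot (perp (e (fst p))) x1).
  set (B := dot (e (fst p)) v2 / dot (perp (e (fst p))) x2).
  assert (Q : Rabs (A - B) <= (4 / m + 16 / (m * m)) * dl).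
  { apply div_lipschitz; auto;
      [apply Rabs_e_dot_le; auto | | | apply e_dot_sub_le; auto | apply perp_dot_sub_le; auto];
      eapply perp_dot_lower_bound; eauto; apply HK; left; auto. }
  replace (INR (snd p) * dot (e (fst p)) v1 / dot (perp (e (fst p))) x1 + sing_sum K' x1 v1 -
           (INR (snd p) * dot (e (fst p)) v2 / dot (perp (e (fst p))) x2 + sing_sum K' x2 v2))
    with (INR (snd p) * (A - B) + (sing_sum K' x1 v1 - sing_sum K' x2 v2)) by (unfold A, B, Rdiv; ring).
  eapply Rle_trans; [apply Rabs_triang|].
  rewrite Rabs_mult, (Rabs_right (INR _)) by (apply Rle_ge, pos_INR).
  assert (INR (snd p) * Rabs (A - B) <= INR (snd p) * ((4 / m + 16 / (m * m)) * dl))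
    by (apply Rmult_le_compat_l; auto; apply pos_INR).
  nra.
Qed.

End RegularTerms.

Lemma continuous_sing_sum K (x v : R -> pt) s :
  continuous (fun t => fst (x t)) s -> continuous (fun t => snd (x t)) s ->
  continuous (fun t => fst (v t)) s -> continuous (fun t => snd (v t)) s ->
  (forall p, In p K -> dot (perp (e (fst p))) (x s) <> 0) ->
  continuous (fun t => sing_sum K (x t) (v t)) s.
Proof.
  intros C1 C2 C3 C4 HK; induction K as [|p K IH]; simpl; [apply continuous_const|].
  apply continuous_Rplus; [|apply IH; intros; apply HK; right; auto].
  unfold dot; simpl.
  apply continuous_Rdiv; [| | apply HK; left; auto].
  - apply continuous_Rmult; [apply continuous_const|].
    apply continuous_Rplus; apply continuous_Rmult; auto; apply continuous_const.
  - apply continuous_Rplus; apply continuous_Rmult; auto; apply continuous_const.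
Qed.

Lemma is_derive_eq (f : R -> R) (x l l' : R) : is_derive f x l -> l = l' -> is_derive f x l'.
Proof. intros; subst; auto. Qed.

Lemma is_derive_Rplus (f g : R -> R) x df dg :
  is_derive f x df -> is_derive g x dg -> is_derive (fun t => f t + g t) x (df + dg).
Proof. exact (is_derive_plus f g x df dg). Qed.

Lemma is_derive_Rmult (f g : R -> R) x df dg : is_derive f x df -> is_derive g x dg ->
  is_derive (fun t => f t * g t) x (df * g x + f x * dg).
Proof. intros; apply (is_derive_mult f g x df dg); auto; intros; apply Rmult_comm. Qed.

Lemma is_derive_Rcomp (f g : R -> R) x df dg : is_derive f (g x) df -> is_derive g x dg ->
  is_derive (fun t => f (g t)) x (dg * df).
Proof. exact (is_derive_comp f g x df dg). Qed.

Lemma is_derive_cos_comp (g : R -> R) x dg :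
  is_derive g x dg -> is_derive (fun t => cos (g t)) x (- sin (g x) * dg).
Proof.
  intros; eapply is_derive_eq; [apply (is_derive_Rcomp cos g x (- sin (g x)) dg); auto | apply Rmult_comm].
  auto_derive; auto; apply Rmult_1_l.
Qed.

Lemma is_derive_sin_comp (g : R -> R) x dg :
  is_derive g x dg -> is_derive (fun t => sin (g t)) x (cos (g x) * dg).
Proof.
  intros; eapply is_derive_eq; [apply (is_derive_Rcomp sin g x (cos (g x)) dg); auto | apply Rmult_comm].
  auto_derive; auto; apply Rmult_1_l.
Qed.

Lemma is_derive_monomial k x : is_derive (fun t => t ^ k) x (INR k * x ^ pred k).
Proof. eapply is_derive_eq; [auto_derive; auto | ring]. Qed.

Lemma is_derive_RInt_0 (g : R -> R) d s : (forall t, Rabs t < d -> continuous g t) -> Rabs s < d ->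
  is_derive (fun y => RInt g 0 y) s (g s).
Proof.
  intros Hc Hs; apply (is_derive_RInt g (fun y => RInt g 0 y) 0 s); [|apply Hc; auto].
  apply (locally_interval s d); auto; intros y Hy.
  apply (@RInt_correct R_CompleteNormedModule), ex_RInt_0_continuous; intros t Ht; apply Hc; lra.
Qed.

Lemma is_derive_Ropp (f : R -> R) x df : is_derive f x df -> is_derive (fun t => - f t) x (- df).
Proof.
  intros Hf; eapply is_derive_eq.
  - apply (is_derive_ext (fun t => -1 * f t)); [intros; simpl; ring | apply is_derive_scal, Hf].
  - ring.
Qed.

Lemma is_derive_atan_comp (f : R -> R) x df :
  is_derive f x df -> is_derive (fun t => atan (f t)) x (df * / (1 + f x ^ 2)).
Proof. intros; apply (is_derive_Rcomp atan f); auto; apply is_derive_Reals, derivable_pt_lim_atan. Qed.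

Lemma RInt_0_Derive (f : R -> R) s : (forall t, Rabs t <= Rabs s -> ex_derive f t) ->
  (forall t, Rabs t <= Rabs s -> continuous (Derive f) t) -> RInt (Derive f) 0 s = f s - f 0.
Proof.
  intros Hd Hc; apply RInt_Derive; intros t Ht; [apply Hd | apply Hc]; apply Rabs_le_of_between_0, Ht.
Qed.

Lemma cos_sin_atan_div p q : 0 < p -> p ^ 2 + q ^ 2 = 1 ->
  cos (atan (q / p)) = p /\ sin (atan (q / p)) = q.
Proof.
  intros Hp Hpq.
  assert (E : sqrt (1 + (q / p)²) = / p).
  { replace (1 + (q / p)²) with ((/ p)²); [apply sqrt_Rsqr; left; apply Rinv_0_lt_compat; auto|].
    unfold Rsqr; replace (q / p * (q / p)) with (q ^ 2 / p ^ 2) by (field; lra).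
    replace (q ^ 2) with (1 - p ^ 2) by lra; field; lra. }
  rewrite cos_atan, sin_atan, E; split; field; lra.
Qed.

Lemma Rabs_div_le_of (a s B : R) : s <> 0 -> Rabs a <= Rabs s * B -> Rabs (a / s) <= B.
Proof.
  intros Hs Ha; assert (0 < Rabs s) by (apply Rabs_pos_lt; auto).
  unfold Rdiv; rewrite Rabs_mult, Rabs_inv; apply (Rmult_le_reg_l (Rabs s)); auto.
  replace (Rabs s * (Rabs a * / Rabs s)) with (Rabs a) by (field; lra); auto.
Qed.

Lemma Rinv_le_2 A : 1/2 <= A -> / A <= 2.
Proof. intros; replace 2 with (/ (1/2)) by field; apply Rinv_le_contravar; lra. Qed.

Lemma div_perturbation_le b1 S1 A1 b2 S2 A2 e1 e2 D M :
  Rabs (A1 - 1) <= e1 -> Rabs (A2 - 1) <= e1 -> e1 <= 1/2 -> Rabs (A1 - A2) <= e2 ->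
  Rabs S1 <= M -> Rabs (S1 - S2) <= D -> Rabs ((b1 - S1) - (b2 - S2)) <= M * e2 ->
  0 <= M -> 0 <= D ->
  Rabs ((b1 - S1 / A1) - (b2 - S2 / A2)) <= M * e2 + 2 * e1 * D + 4 * M * e2.
Proof.
  intros HA1 HA2 He1 HA12 HS1 HS12 Hu HM HD.
  assert (P1 : 1/2 <= A1) by (apply Rabs_le_between in HA1; lra).
  assert (P2 : 1/2 <= A2) by (apply Rabs_le_between in HA2; lra).
  assert (Hi1 : 0 <= / A1) by (left; apply Rinv_0_lt_compat; lra).
  assert (Hi2 : 0 <= / A2) by (left; apply Rinv_0_lt_compat; lra).
  set (h1 := (A1 - 1) / A1); set (h2 := (A2 - 1) / A2).
  replace ((b1 - S1 / A1) - (b2 - S2 / A2))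
    with (((b1 - S1) - (b2 - S2)) + (S1 - S2) * h2 + S1 * (h1 - h2)) by (unfold h1, h2; field; lra).
  assert (Hh2 : Rabs h2 <= 2 * e1).
  { unfold h2, Rdiv; rewrite Rabs_mult, Rabs_inv, (Rabs_right A2) by lra.
    rewrite Rmult_comm; apply Rmult_le_compat; auto; [apply Rabs_pos | apply Rinv_le_2; lra]. }
  assert (Hh12 : Rabs (h1 - h2) <= 4 * e2).
  { unfold h1, h2; replace ((A1 - 1) / A1 - (A2 - 1) / A2) with ((A1 - A2) * (/ A1 * / A2)) by (field; lra).
    rewrite Rabs_mult, Rabs_mult, !Rabs_inv, (Rabs_right A1), (Rabs_right A2) by lra.
    replace (4 * e2) with (e2 * (2 * 2)) by ring.
    apply Rmult_le_compat; auto; [apply Rabs_pos | apply Rmult_le_pos; auto |].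
    apply Rmult_le_compat; auto; apply Rinv_le_2; lra. }
  eapply Rle_trans; [apply Rabs_triang|].
  eapply Rle_trans; [apply Rplus_le_compat_r, Rabs_triang|]; rewrite !Rabs_mult.
  assert (Rabs (S1 - S2) * Rabs h2 <= D * (2 * e1)) by (apply Rmult_le_compat; auto; apply Rabs_pos).
  assert (Rabs S1 * Rabs (h1 - h2) <= M * (4 * e2)) by (apply Rmult_le_compat; auto; apply Rabs_pos).
  nra.
Qed.

Section FixedPointOperator.
Variables (phi : R) (x0 : pt) (N : nat) (K : list (R * nat)) (c1 : R) (H : R -> R).

Definition dev (b : R -> R) (t : R) : R := t * b t.
Definition angle (b : R -> R) (t : R) : R := phi + PI / 2 + dev b t.
Definition curve (b : R -> R) (s : R) : pt :=
  (fst x0 + RInt (fun t => cos (angle b t)) 0 s, snd x0 + RInt (fun t => sin (angle b t)) 0 s).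
Definition cos_avg (b : R -> R) : R -> R := wavg 0 (fun t => cos (dev b t)).
Definition sin_quot (b : R -> R) (s : R) : R := if Req_EM_T s 0 then b 0 else sin (dev b s) / s.
Definition defect (b : R -> R) (s : R) : R := b s - sin_quot b s / cos_avg b s.
Definition regular_part (b : R -> R) (s : R) : R := sing_sum K (curve b s) (e (angle b s)) - c1 * H s.
Definition rhs (b : R -> R) (s : R) : R := INR N * defect b s + regular_part b s.
Definition fix_op (b : R -> R) : R -> R := wavg N (rhs b).

Lemma continuous_dev b t : continuous b t -> continuous (dev b) t.
Proof. intros; apply continuous_Rmult; auto; apply continuous_id. Qed.

Lemma continuous_angle b t : continuous b t -> continuous (angle b) t.
Proof. intros; apply continuous_Rplus; [apply continuous_const | apply continuous_dev; auto]. Qed.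

Lemma Rabs_dev_sub_le b1 b2 t D : Rabs (b1 t - b2 t) <= D -> Rabs (dev b1 t - dev b2 t) <= Rabs t * D.
Proof.
  intros; unfold dev; replace (t * b1 t - t * b2 t) with (t * (b1 t - b2 t)) by ring.
  rewrite Rabs_mult; apply Rmult_le_compat_l; auto; apply Rabs_pos.
Qed.

Lemma Rabs_dev_le b t M : Rabs (b t) <= M -> Rabs (dev b t) <= Rabs t * M.
Proof. intros; unfold dev; rewrite Rabs_mult; apply Rmult_le_compat_l; auto; apply Rabs_pos. Qed.

Lemma Rabs_sin_quot_le M b s : Rabs (b s) <= M -> Rabs (b 0) <= M -> Rabs (sin_quot b s) <= M.
Proof.
  intros Hs H0; unfold sin_quot; destruct (Req_EM_T s 0) as [->|Hne]; auto.
  apply Rabs_div_le_of; auto; eapply Rle_trans; [apply Rabs_sin_le | apply Rabs_dev_le; auto].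
Qed.

Lemma sin_quot_lipschitz b1 b2 s D : Rabs (b1 s - b2 s) <= D -> Rabs (b1 0 - b2 0) <= D ->
  Rabs (sin_quot b1 s - sin_quot b2 s) <= D.
Proof.
  intros Hs H0; unfold sin_quot; destruct (Req_EM_T s 0) as [->|Hne]; auto.
  replace (sin (dev b1 s) / s - sin (dev b2 s) / s) with ((sin (dev b1 s) - sin (dev b2 s)) / s)
    by (field; auto).
  apply Rabs_div_le_of; auto; eapply Rle_trans; [apply sin_lipschitz | apply Rabs_dev_sub_le; auto].
Qed.

Lemma sub_sin_quot_lipschitz M b1 b2 s D : Rabs (b1 s) <= M -> Rabs (b2 s) <= M ->
  Rabs (b1 s - b2 s) <= D -> 0 <= M ->
  Rabs ((b1 s - sin_quot b1 s) - (b2 s - sin_quot b2 s)) <= Rabs s * M * D.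
Proof.
  intros H1 H2 HD HM; unfold sin_quot; destruct (Req_EM_T s 0) as [->|Hne].
  - replace (b1 0 - b1 0 - (b2 0 - b2 0)) with 0 by ring; rewrite Rabs_R0; lra.
  - replace (b1 s - sin (dev b1 s) / s - (b2 s - sin (dev b2 s) / s))
      with (((dev b1 s - sin (dev b1 s)) - (dev b2 s - sin (dev b2 s))) / s) by (unfold dev; field; auto).
    apply Rabs_div_le_of; auto.
    eapply Rle_trans; [apply (id_sub_sin_lipschitz _ _ (Rabs s * M)); apply Rabs_dev_le; auto|].
    replace (Rabs s * (Rabs s * M * D)) with ((Rabs s * M) * (Rabs s * D)) by ring.
    apply Rmult_le_compat_l; [apply Rmult_le_pos; auto; apply Rabs_pos | apply Rabs_dev_sub_le; auto].
Qed.

Section Estimates.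
Variables (d M : R).

Lemma curve_near b s : cont_bounded d M b -> Rabs s < d -> near_pt x0 (Rabs s) (curve b s).
Proof.
  intros Hb Hs; unfold near_pt, curve; simpl; rewrite !Rplus_minus_l, <- (Rmult_1_r (Rabs s)).
  split; apply abs_RInt_0_le.
  - intros; apply continuous_cos_comp, continuous_angle, Hb; lra.
  - intros; apply Rabs_cos_le_1.
  - intros; apply continuous_sin_comp, continuous_angle, Hb; lra.
  - intros; apply Rabs_sin_le_1.
Qed.

Lemma continuous_curve b s : cont_bounded d M b -> Rabs s < d ->
  continuous (fun t => fst (curve b t)) s /\ continuous (fun t => snd (curve b t)) s.
Proof.
  intros Hb Hs; unfold curve; simpl; split;
    apply continuous_Rplus; try apply continuous_const; apply (continuous_RInt_0 _ d); auto;
    intros; [apply continuous_cos_comp | apply continuous_sin_comp]; apply continuous_angle, Hb; auto.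
Qed.

Lemma cos_avg_near_1 b s : cont_bounded d M b -> Rabs s < d -> Rabs (cos_avg b s - 1) <= Rabs s * M.
Proof.
  intros Hb Hs; unfold cos_avg; replace 1 with (1 / INR 1) at 1 by (simpl; field).
  apply wavg_sub_const_le; [intros; apply continuous_cos_comp, continuous_dev, Hb; lra|].
  intros t Ht; eapply Rle_trans; [apply Rabs_cos_sub_1_le|].
  eapply Rle_trans; [apply Rabs_dev_le, Hb; lra|].
  apply Rmult_le_compat_r; auto; eapply cont_bounded_nonneg; eauto.
Qed.

Lemma cos_avg_ge_half b s : cont_bounded d M b -> Rabs s < d -> M * d <= 1/2 -> 1/2 <= cos_avg b s.
Proof.
  intros Hb Hs HMd; assert (A := cos_avg_near_1 b s Hb Hs).
  assert (HM := cont_bounded_nonneg d M b s Hb Hs).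
  assert (Rabs s * M <= d * M) by (apply Rmult_le_compat_r; auto; lra).
  apply Rabs_le_between in A; lra.
Qed.

Lemma continuous_cos_avg b s : cont_bounded d M b -> Rabs s < d -> continuous (cos_avg b) s.
Proof.
  intros Hb Hs; apply (continuous_wavg _ 0 d); auto.
  intros; apply continuous_cos_comp, continuous_dev, Hb; auto.
Qed.

Lemma continuous_sin_quot b s : cont_bounded d M b -> Rabs s < d -> continuous (sin_quot b) s.
Proof.
  intros Hb Hs; destruct (Req_dec s 0) as [->|Hs0].
  - apply continuous_of_eps_delta; intros eps He.
    assert (HM := cont_bounded_nonneg d M b 0 Hb Hs).
    destruct (continuous_eps_delta b 0 (proj1 (Hb 0 Hs)) (eps / 2)) as [del [Hdel Hy]]; [lra|].
    set (r := Rmin (Rmin del d) (eps / (2 * (M * M + 1)))).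
    assert (Hr1 : r <= del) by (unfold r; eapply Rle_trans; apply Rmin_l).
    assert (Hr2 : r <= d) by (unfold r; eapply Rle_trans; [apply Rmin_l | apply Rmin_r]).
    assert (Hr3 : r <= eps / (2 * (M * M + 1))) by (unfold r; apply Rmin_r).
    assert (Hd0 : 0 < d) by (rewrite Rabs_R0 in Hs; lra).
    assert (HMM : 0 < M * M + 1) by nra.
    exists r; split; [unfold r; repeat apply Rmin_pos; auto; apply Rdiv_lt_0_compat; lra|].
    intros y Hyr; rewrite Rminus_0_r in Hyr.
    assert (Hyd : Rabs y < d) by lra.
    assert (U := sub_sin_quot_lipschitz M b (fun _ => 0) y M (proj2 (Hb y Hyd))
                  ltac:(cbv beta; rewrite Rabs_R0; lra) ltac:(cbv beta; rewrite Rminus_0_r; apply Hb; auto) HM).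
    assert (Z : sin_quot (fun _ : R => 0) y = 0).
    { unfold sin_quot, dev; destruct (Req_EM_T y 0); auto; rewrite Rmult_0_r, sin_0; unfold Rdiv; ring. }
    rewrite Z in U; replace (b y - sin_quot b y - (0 - 0)) with (b y - sin_quot b y) in U by ring.
    replace (sin_quot b 0) with (b 0) by (unfold sin_quot; destruct (Req_EM_T 0 0); congruence).
    assert (B := Hy y ltac:(rewrite Rminus_0_r; lra)).
    replace (sin_quot b y - b 0) with (- (b y - sin_quot b y) + (b y - b 0)) by ring.
    eapply Rle_trans; [apply Rabs_triang|]; rewrite Rabs_Ropp.
    assert (Rabs y * M * M <= eps / 2).
    { apply Rle_trans with (eps / (2 * (M * M + 1)) * (M * M + 1)); [|right; field; lra].
      rewrite Rmult_assoc; apply Rmult_le_compat; try nra; apply Rabs_pos. }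
    lra.
  - apply (continuous_ext_loc _ (fun y => sin (dev b y) / y)).
    + apply (locally_punctured s d); auto; intros y Hy0 _.
      unfold sin_quot; destruct (Req_EM_T y 0); [contradiction | reflexivity].
    + apply continuous_Rdiv; auto; [apply continuous_sin_comp, continuous_dev, Hb; auto | apply continuous_id].
Qed.

Variables (b1 b2 : R -> R) (D : R).
Hypotheses (H1 : cont_bounded d M b1) (H2 : cont_bounded d M b2) (HD : close_on d D b1 b2).

Lemma Rabs_angle_sub_le t : Rabs t < d -> Rabs (angle b1 t - angle b2 t) <= d * D.
Proof.
  intros Ht; unfold angle.
  replace (phi + PI / 2 + dev b1 t - (phi + PI / 2 + dev b2 t)) with (dev b1 t - dev b2 t) by ring.
  eapply Rle_trans; [apply Rabs_dev_sub_le, HD; auto|].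
  apply Rmult_le_compat_r; [eapply close_on_nonneg; eauto | lra].
Qed.

Lemma curve_lipschitz s : Rabs s < d ->
  Rabs (fst (curve b1 s) - fst (curve b2 s)) <= Rabs s * (d * D) /\
  Rabs (snd (curve b1 s) - snd (curve b2 s)) <= Rabs s * (d * D).
Proof.
  intros Hs; unfold curve; simpl; rewrite !Rminus_plus_l_l; split; apply abs_RInt_0_sub_le.
  - intros; apply continuous_cos_comp, continuous_angle, H1; lra.
  - intros; apply continuous_cos_comp, continuous_angle, H2; lra.
  - intros t Ht; eapply Rle_trans; [apply cos_lipschitz | apply Rabs_angle_sub_le; lra].
  - intros; apply continuous_sin_comp, continuous_angle, H1; lra.
  - intros; apply continuous_sin_comp, continuous_angle, H2; lra.
  - intros t Ht; eapply Rle_trans; [apply sin_lipschitz | apply Rabs_angle_sub_le; lra].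
Qed.

Lemma cos_avg_lipschitz s : Rabs s < d -> Rabs (cos_avg b1 s - cos_avg b2 s) <= Rabs s * D.
Proof.
  intros Hs; unfold cos_avg.
  assert (C1 : forall b, cont_bounded d M b -> forall t, Rabs t <= Rabs s -> continuous (fun t => cos (dev b t)) t)
    by (intros b Hb t Ht; apply continuous_cos_comp, continuous_dev, Hb; lra).
  rewrite wavg_sub by auto.
  rewrite <- (Rminus_0_r (wavg 0 _ s)), <- (Rdiv_0_l (INR 1)).
  apply wavg_sub_const_le; [intros; apply continuous_Rminus; apply C1; auto|].
  intros t Ht; rewrite Rminus_0_r; eapply Rle_trans; [apply cos_lipschitz|].
  eapply Rle_trans; [apply Rabs_dev_sub_le, HD; lra|].
  apply Rmult_le_compat_r; auto; eapply close_on_nonneg; eauto.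
Qed.

Hypothesis HMd : M * d <= 1/2.

Lemma defect_lipschitz s : Rabs s < d -> Rabs (defect b1 s - defect b2 s) <= 7 * M * d * D.
Proof.
  intros Hs; unfold defect.
  assert (HM := cont_bounded_nonneg d M b1 s H1 Hs); assert (HD0 := close_on_nonneg d D b1 b2 s HD Hs).
  assert (Has := Rabs_pos s); assert (Hs0 : Rabs 0 < d) by (rewrite Rabs_R0; lra).
  replace (7 * M * d * D) with (M * (d * D) + 2 * (M * d) * D + 4 * M * (d * D)) by ring.
  apply div_perturbation_le; [ | | | | | | | exact HM | exact HD0].
  - eapply Rle_trans; [apply (cos_avg_near_1 _ _ H1 Hs)|]; rewrite Rmult_comm; apply Rmult_le_compat_l; lra.
  - eapply Rle_trans; [apply (cos_avg_near_1 _ _ H2 Hs)|]; rewrite Rmult_comm; apply Rmult_le_compat_l; lra.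
  - lra.
  - eapply Rle_trans; [apply cos_avg_lipschitz; auto | apply Rmult_le_compat_r; lra].
  - apply Rabs_sin_quot_le; apply H1; auto.
  - apply sin_quot_lipschitz; apply HD; auto.
  - eapply Rle_trans; [apply (sub_sin_quot_lipschitz M); auto; [apply H1 | apply H2]; auto|].
    replace (M * (d * D)) with (d * M * D) by ring.
    apply Rmult_le_compat_r; auto; apply Rmult_le_compat_r; lra.
Qed.

End Estimates.

Lemma defect_0 s : defect (fun _ => 0) s = 0.
Proof.
  unfold defect, sin_quot, dev; destruct (Req_EM_T s 0); unfold Rdiv; [ring|].
  rewrite Rmult_0_r, sin_0; ring.
Qed.

Definition lip_const (m : R) : R := sum_mult K * (4 / m + 16 / (m * m)).

Section Operator.
Variables (m d M : R).
Hypotheses (Hm : 0 < m) (HK : away_from_lines K x0 m) (Hdm : d <= m / 4) (Hd1 : d <= 1)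
  (HMd : M * d <= 1/2) (HHc : forall t, continuous H t).

Lemma Rabs_defect_le b s : cont_bounded d M b -> Rabs s < d -> Rabs (defect b s) <= 7 * M * d * M.
Proof.
  intros Hb Hs; assert (HM := cont_bounded_nonneg d M b s Hb Hs).
  rewrite <- (Rminus_0_r (defect b s)), <- (defect_0 s).
  apply (defect_lipschitz d M); auto; [apply cont_bounded_0; auto|].
  intros t Ht; rewrite Rminus_0_r; apply Hb; auto.
Qed.

Lemma perp_dot_curve_lower_bound b s p : cont_bounded d M b -> Rabs s < d -> In p K ->
  m / 2 <= Rabs (dot (perp (e (fst p))) (curve b s)).
Proof.
  intros Hb Hs Hp; eapply perp_dot_lower_bound; [apply HK; auto | apply (curve_near d M); eauto | lra].
Qed.

Lemma continuous_regular_part b s : cont_bounded d M b -> Rabs s < d -> continuous (regular_part b) s.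
Proof.
  intros Hb Hs; unfold regular_part; apply continuous_Rminus;
    [| apply continuous_Rmult; [apply continuous_const | apply HHc]].
  destruct (continuous_curve d M b s Hb Hs).
  apply (continuous_sing_sum K (curve b) (fun t => e (angle b t))); auto; simpl;
    [apply continuous_cos_comp | apply continuous_sin_comp | ];
    try (apply continuous_angle, Hb; auto).
  intros p Hp Z; assert (A := perp_dot_curve_lower_bound b s p Hb Hs Hp); rewrite Z, Rabs_R0 in A; lra.
Qed.

Lemma Rabs_regular_part_le Hmax b s : (forall t, Rabs t <= 1 -> Rabs (H t) <= Hmax) ->
  cont_bounded d M b -> Rabs s < d -> Rabs (regular_part b s) <= sum_mult K * (4 / m) + Rabs c1 * Hmax.
Proof.
  intros HH Hb Hs; unfold regular_part.
  eapply Rle_trans; [apply Rabs_triang|]; rewrite Rabs_Ropp, Rabs_mult.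
  apply Rplus_le_compat; [|apply Rmult_le_compat_l; [apply Rabs_pos | apply HH; lra]].
  apply (Rabs_sing_sum_le K x0 m d); auto; [|apply unit_box_e].
  eapply near_pt_mono; [apply (curve_near d M); auto | lra].
Qed.

Lemma regular_part_lipschitz b1 b2 D s : cont_bounded d M b1 -> cont_bounded d M b2 ->
  close_on d D b1 b2 -> Rabs s < d -> Rabs (regular_part b1 s - regular_part b2 s) <= lip_const m * (d * D).
Proof.
  intros H1 H2 HD Hs; unfold regular_part.
  replace (sing_sum K (curve b1 s) (e (angle b1 s)) - c1 * H s
           - (sing_sum K (curve b2 s) (e (angle b2 s)) - c1 * H s))
    with (sing_sum K (curve b1 s) (e (angle b1 s)) - sing_sum K (curve b2 s) (e (angle b2 s))) by ring.
  assert (HD0 := close_on_nonneg d D b1 b2 s HD Hs).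
  destruct (curve_lipschitz d M b1 b2 D H1 H2 HD s Hs) as [L1 L2].
  assert (Hsd : Rabs s * (d * D) <= d * D).
  { assert (Has := Rabs_pos s).
    rewrite <- (Rmult_1_l (d * D)) at 2; apply Rmult_le_compat_r; [apply Rmult_le_pos|]; lra. }
  unfold lip_const; apply (sing_sum_lipschitz K x0 m d); auto; try apply unit_box_e; try lra;
    try (eapply near_pt_mono; [apply (curve_near d M); auto | lra]);
    simpl; eapply Rle_trans; [apply cos_lipschitz | | apply sin_lipschitz | ];
    apply (Rabs_angle_sub_le d); auto.
Qed.

Lemma continuous_rhs b s : cont_bounded d M b -> Rabs s < d -> continuous (rhs b) s.
Proof.
  intros Hb Hs; unfold rhs, defect; apply continuous_Rplus; [|apply continuous_regular_part; auto].
  apply continuous_Rmult; [apply continuous_const|]; apply continuous_Rminus; [apply Hb; auto|].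
  apply continuous_Rdiv; [apply (continuous_sin_quot d M) | apply (continuous_cos_avg d M) |]; auto.
  assert (A := cos_avg_ge_half d M b s Hb Hs HMd); lra.
Qed.

Lemma rhs_lipschitz b1 b2 D s : cont_bounded d M b1 -> cont_bounded d M b2 -> close_on d D b1 b2 ->
  Rabs s < d -> Rabs (rhs b1 s - rhs b2 s) <= (INR N * 7 * M + lip_const m) * d * D.
Proof.
  intros H1 H2 HD Hs; unfold rhs.
  replace (INR N * defect b1 s + regular_part b1 s - (INR N * defect b2 s + regular_part b2 s))
    with (INR N * (defect b1 s - defect b2 s) + (regular_part b1 s - regular_part b2 s)) by ring.
  eapply Rle_trans; [apply Rabs_triang|]; rewrite Rabs_mult, (Rabs_right (INR N)) by (apply Rle_ge, pos_INR).
  assert (A : Rabs (defect b1 s - defect b2 s) <= 7 * M * d * D) by (apply (defect_lipschitz d M); auto).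
  assert (B := regular_part_lipschitz b1 b2 D s H1 H2 HD Hs).
  assert (INR N * Rabs (defect b1 s - defect b2 s) <= INR N * (7 * M * d * D))
    by (apply Rmult_le_compat_l; auto; apply pos_INR).
  nra.
Qed.

Lemma Rabs_rhs_le Hmax b s : (forall t, Rabs t <= 1 -> Rabs (H t) <= Hmax) ->
  cont_bounded d M b -> Rabs s < d ->
  Rabs (rhs b s) <= INR N * 7 * M * d * M + (sum_mult K * (4 / m) + Rabs c1 * Hmax).
Proof.
  intros HH Hb Hs; unfold rhs.
  eapply Rle_trans; [apply Rabs_triang|]; rewrite Rabs_mult, (Rabs_right (INR N)) by (apply Rle_ge, pos_INR).
  assert (A := Rabs_defect_le b s Hb Hs); assert (B := Rabs_regular_part_le Hmax b s HH Hb Hs).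
  assert (INR N * Rabs (defect b s) <= INR N * (7 * M * d * M)) by (apply Rmult_le_compat_l; auto; apply pos_INR).
  nra.
Qed.

Lemma continuous_fix_op b s : cont_bounded d M b -> Rabs s < d -> continuous (fix_op b) s.
Proof. intros; apply (continuous_wavg _ N d); auto; intros; apply continuous_rhs; auto. Qed.

Lemma fix_op_lipschitz b1 b2 D s : cont_bounded d M b1 -> cont_bounded d M b2 -> close_on d D b1 b2 ->
  Rabs s < d -> Rabs (fix_op b1 s - fix_op b2 s) <= (INR N * 7 * M + lip_const m) * d * D.
Proof.
  intros H1 H2 HD Hs; unfold fix_op.
  rewrite wavg_sub by (intros; apply continuous_rhs; auto; lra).
  rewrite <- (Rminus_0_r (wavg N _ s)), <- (Rdiv_0_l (INR (S N))).
  apply wavg_sub_const_le; [intros; apply continuous_Rminus; apply continuous_rhs; auto; lra|].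
  intros t Ht; rewrite Rminus_0_r; apply rhs_lipschitz; auto; lra.
Qed.

Lemma Rabs_fix_op_le Hmax b s : (forall t, Rabs t <= 1 -> Rabs (H t) <= Hmax) ->
  cont_bounded d M b -> Rabs s < d ->
  Rabs (fix_op b s) <= INR N * 7 * M * d * M + (sum_mult K * (4 / m) + Rabs c1 * Hmax).
Proof.
  intros HH Hb Hs; unfold fix_op.
  rewrite <- (Rminus_0_r (wavg N _ s)), <- (Rdiv_0_l (INR (S N))).
  apply wavg_sub_const_le; [intros; apply continuous_rhs; auto; lra|].
  intros t Ht; rewrite Rminus_0_r; apply Rabs_rhs_le; auto; lra.
Qed.

End Operator.

Lemma dot_e_angle b s : dot (e phi) (e (angle b s)) = - sin (dev b s).
Proof. apply dot_rotated. Qed.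

Lemma perp_dot_curve d M b s : cont_bounded d M b -> Rabs s < d -> dot (perp (e phi)) x0 = 0 ->
  dot (perp (e phi)) (curve b s) = s * cos_avg b s.
Proof.
  intros Hb Hs H0; unfold dot, perp, e, curve in *; simpl in *.
  assert (C1 : ex_RInt (fun t => cos (angle b t)) 0 s)
    by (apply ex_RInt_0_continuous; intros; apply continuous_cos_comp, continuous_angle, Hb; lra).
  assert (C2 : ex_RInt (fun t => sin (angle b t)) 0 s)
    by (apply ex_RInt_0_continuous; intros; apply continuous_sin_comp, continuous_angle, Hb; lra).
  assert (E : RInt (fun t => cos (dev b t)) 0 s
              = - sin phi * RInt (fun t => cos (angle b t)) 0 s + cos phi * RInt (fun t => sin (angle b t)) 0 s).
  { rewrite (RInt_ext _ (fun t => plus (scal (- sin phi) (cos (angle b t))) (scal (cos phi) (sin (angle b t))))).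
    - rewrite (@RInt_plus R_CompleteNormedModule), !(@RInt_scal R_CompleteNormedModule); auto;
        apply (@ex_RInt_scal R_CompleteNormedModule); auto.
    - intros t _; rewrite <- (perp_dot_rotated phi (dev b t)); reflexivity. }
  assert (A : s * cos_avg b s = RInt (fun t => cos (dev b t)) 0 s).
  { unfold cos_avg, wavg; destruct (Req_EM_T s 0) as [->|Hs0]; [rewrite RInt_point, Rmult_0_l; reflexivity|].
    rewrite (RInt_ext (fun t => t ^ 0 * cos (dev b t)) (fun t => cos (dev b t))) by (intros; simpl; ring).
    simpl; field; auto. }
  rewrite A, E; lra.
Qed.

Lemma curve_ext (b1 b2 : R -> R) s :
  (forall t, Rabs t <= Rabs s -> b1 t = b2 t) -> curve b1 s = curve b2 s.
Proof.
  intros Hb; unfold curve; f_equal; f_equal; apply RInt_ext; intros t Ht;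
    unfold angle, dev; rewrite Hb; auto; apply Rabs_le_of_between_0; lra.
Qed.

Section AtFixedPoint.
Variables (m d M r : R) (b : R -> R).
Hypotheses (Hm : 0 < m) (HK : away_from_lines K x0 m) (Hdm : d <= m / 4) (HMd : M * d <= 1/2)
  (HHc : forall t, continuous H t) (Hb : cont_bounded d M b) (Hr : r <= d)
  (Hfix : forall t, Rabs t < r -> fix_op b t = b t).

Definition angle_speed (s : R) : R := rhs b s - INR N * b s.

(** Differentiating [s^N dev b s = int_0^s t^N rhs b t] away from [0]; at [0] the fixed point
    equation reads [b 0 = rhs b 0 / (N + 1)]. *)
Lemma is_derive_dev s : Rabs s < r -> is_derive (dev b) s (angle_speed s).
Proof.
  intros Hs; assert (Hsd : Rabs s < d) by lra; unfold angle_speed.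
  assert (Hrc : forall t, Rabs t < d -> continuous (fun t => t ^ N * rhs b t) t)
    by (intros t Ht; apply continuous_Rmult; [apply continuous_monomial | apply (continuous_rhs m d M); auto]).
  destruct (Req_dec s 0) as [->|Hs0].
  - apply is_derive_Reals; intros eps He.
    destruct (continuous_eps_delta b 0 (proj1 (Hb 0 Hsd)) (eps / 2)) as [del [Hdel Hy]]; [lra|].
    exists (mkposreal del Hdel); intros h Hh0 Hhd; simpl in Hhd.
    assert (E0 : b 0 = rhs b 0 / INR (S N)).
    { rewrite <- (Hfix 0 Hs); unfold fix_op, wavg; destruct (Req_EM_T 0 0); [reflexivity | congruence]. }
    assert (HS : 0 < INR (S N)) by (apply lt_0_INR; lia); rewrite S_INR in HS, E0.
    replace ((dev b (0 + h) - dev b 0) / h - (rhs b 0 - INR N * b 0)) with (b h - b 0)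
      by (unfold dev; rewrite Rplus_0_l, E0; field; split; lra).
    assert (A := Hy h ltac:(rewrite Rminus_0_r; lra)); lra.
  - apply (is_derive_ext_loc (fun y => RInt (fun t => t ^ N * rhs b t) 0 y / y ^ N)).
    + apply (locally_punctured s r); auto; intros y Hy0 Hyr.
      unfold dev; rewrite <- (Hfix y Hyr); unfold fix_op, wavg; destruct (Req_EM_T y 0); [congruence|].
      simpl; field; split; auto; apply pow_nonzero; auto.
    + eapply is_derive_eq.
      * apply is_derive_div;
          [apply (is_derive_RInt_0 _ d); auto | apply is_derive_monomial | apply pow_nonzero; auto].
      * assert (Eb : b s = RInt (fun t => t ^ N * rhs b t) 0 s / s ^ S N).
        { rewrite <- (Hfix s Hs); unfold fix_op, wavg; destruct (Req_EM_T s 0); [congruence | reflexivity]. }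
        rewrite Eb; generalize (RInt (fun t => t ^ N * rhs b t) 0 s); intro I.
        destruct N as [|n]; simpl pred; [simpl; field; auto|].
        rewrite S_INR; simpl; field; split; auto; apply pow_nonzero; auto.
Qed.

Lemma continuous_angle_speed s : Rabs s < d -> continuous angle_speed s.
Proof.
  intros Hs; apply continuous_Rminus; [apply (continuous_rhs m d M); auto|].
  apply continuous_Rmult; [apply continuous_const | apply Hb; auto].
Qed.

Lemma is_derive_curve_fst s : Rabs s < d -> is_derive (fun t => fst (curve b t)) s (cos (angle b s)).
Proof.
  intros Hs; eapply is_derive_eq;
    [apply is_derive_Rplus; [apply is_derive_const | apply (is_derive_RInt_0 _ d)] |].
  - intros; apply continuous_cos_comp, continuous_angle, Hb; auto.
  - auto.
  - apply Rplus_0_l.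
Qed.

Lemma is_derive_curve_snd s : Rabs s < d -> is_derive (fun t => snd (curve b t)) s (sin (angle b s)).
Proof.
  intros Hs; eapply is_derive_eq;
    [apply is_derive_Rplus; [apply is_derive_const | apply (is_derive_RInt_0 _ d)] |].
  - intros; apply continuous_sin_comp, continuous_angle, Hb; auto.
  - auto.
  - apply Rplus_0_l.
Qed.

Lemma dcurve_curve s : Rabs s < d -> dcurve (curve b) s = e (angle b s).
Proof.
  intros Hs; unfold dcurve, e; f_equal; apply is_derive_unique;
    [apply is_derive_curve_fst | apply is_derive_curve_snd]; auto.
Qed.

Lemma is_derive_angle s : Rabs s < r -> is_derive (angle b) s (angle_speed s).
Proof.
  intros; eapply is_derive_eq; [apply is_derive_Rplus; [apply is_derive_const | apply is_derive_dev; auto]|].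
  apply Rplus_0_l.
Qed.

Lemma is_derive_dcurve_fst s : Rabs s < r ->
  is_derive (fun u => fst (dcurve (curve b) u)) s (- sin (angle b s) * angle_speed s).
Proof.
  intros Hs; apply (is_derive_ext_loc (fun u => cos (angle b u))).
  - apply (locally_interval s d); [lra|]; intros y Hy; rewrite dcurve_curve; auto.
  - apply is_derive_cos_comp, is_derive_angle; auto.
Qed.

Lemma is_derive_dcurve_snd s : Rabs s < r ->
  is_derive (fun u => snd (dcurve (curve b) u)) s (cos (angle b s) * angle_speed s).
Proof.
  intros Hs; apply (is_derive_ext_loc (fun u => sin (angle b u))).
  - apply (locally_interval s d); [lra|]; intros y Hy; rewrite dcurve_curve; auto.
  - apply is_derive_sin_comp, is_derive_angle; auto.
Qed.

Lemma ddcurve_curve s : Rabs s < r ->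
  dcurve (dcurve (curve b)) s = (- sin (angle b s) * angle_speed s, cos (angle b s) * angle_speed s).
Proof.
  intros; unfold dcurve at 1; f_equal; apply is_derive_unique;
    [apply is_derive_dcurve_fst | apply is_derive_dcurve_snd]; auto.
Qed.

Lemma C2_on_curve : C2_on r (curve b).
Proof.
  intros s Hs; repeat split.
  - eexists; apply is_derive_curve_fst; lra.
  - eexists; apply is_derive_curve_snd; lra.
  - eexists; apply is_derive_dcurve_fst; auto.
  - eexists; apply is_derive_dcurve_snd; auto.
  - apply (continuous_ext_loc _ (fun u => - sin (angle b u) * angle_speed u)).
    + apply (locally_interval s r); auto; intros y Hy; rewrite ddcurve_curve; auto.
    + apply continuous_Rmult; [apply continuous_Ropp, continuous_sin_comp, continuous_angle, Hb; lra|].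
      apply continuous_angle_speed; lra.
  - apply (continuous_ext_loc _ (fun u => cos (angle b u) * angle_speed u)).
    + apply (locally_interval s r); auto; intros y Hy; rewrite ddcurve_curve; auto.
    + apply continuous_Rmult; [apply continuous_cos_comp, continuous_angle, Hb; lra|].
      apply continuous_angle_speed; lra.
Qed.

End AtFixedPoint.
End FixedPointOperator.

Lemma bounded_on_unit_interval (H : R -> R) : (forall t, continuous H t) ->
  exists Hmax, forall t, Rabs t <= 1 -> Rabs (H t) <= Hmax.
Proof.
  intros Hc; destruct (continuity_ab_maj (fun t => Rabs (H t)) (-1) 1) as [t0 [HM _]]; [lra| |].
  - intros c _; apply continuity_pt_filterlim, (continuous_comp H Rabs); [apply Hc|].
    apply continuity_pt_filterlim, Rcontinuity_abs.
  - exists (Rabs (H t0)); intros t Ht; apply HM; apply Rabs_le_between in Ht; lra.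
Qed.

Lemma exists_small_radius m M L (N : nat) : 0 < m -> 0 <= M -> 0 <= L ->
  exists d, 0 < d /\ d <= 1 /\ d <= m / 4 /\ M * d <= 1/2 /\
    INR N * 7 * M * M * d <= 1 /\ (INR N * 7 * M + L) * d <= 1/2.
Proof.
  intros Hm HM HL; assert (HN := pos_INR N).
  assert (H1 : 0 <= INR N * 7 * M * M) by (repeat apply Rmult_le_pos; lra).
  assert (H2 : 0 <= INR N * 7 * M) by (repeat apply Rmult_le_pos; lra).
  assert (H3 : 0 < 4 / m) by (apply Rdiv_lt_0_compat; lra).
  set (C := 1 + 4 / m + 2 * M + INR N * 7 * M * M + 2 * (INR N * 7 * M + L)).
  assert (HC : 0 < C) by (unfold C; lra).
  assert (Hle : forall X, 0 <= X -> X <= C -> X * / C <= 1).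
  { intros X HX HXC; apply (Rmult_le_reg_r C); auto; rewrite Rmult_assoc, Rinv_l by lra; lra. }
  exists (/ C); repeat split.
  - apply Rinv_0_lt_compat; auto.
  - rewrite <- (Rmult_1_l (/ C)); apply Hle; unfold C; lra.
  - assert (A : 4 / m * / C <= 1) by (apply Hle; unfold C; lra).
    apply (Rmult_le_reg_l (4 / m)); auto; replace (4 / m * (m / 4)) with 1 by (field; lra); lra.
  - assert (A : 2 * M * / C <= 1) by (apply Hle; unfold C; lra); lra.
  - apply Hle; unfold C; lra.
  - assert (A : 2 * (INR N * 7 * M + L) * / C <= 1) by (apply Hle; unfold C; lra); lra.
Qed.

Lemma lip_const_nonneg K m : 0 < m -> 0 <= lip_const K m.
Proof.
  intros Hm; unfold lip_const; apply Rmult_le_pos; [apply sum_mult_nonneg|].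
  assert (0 < 4 / m) by (apply Rdiv_lt_0_compat; lra).
  assert (0 < 16 / (m * m)) by (apply Rdiv_lt_0_compat; nra); lra.
Qed.

Section Decomposition.
Variables (J K : list (R * nat)) (phi : R) (x0 : pt) (N n : nat) (H : R -> R) (m : R).
Hypotheses (Hm : 0 < m) (HK : away_from_lines K x0 m) (HHc : forall t, continuous H t)
  (H0 : dot (perp (e phi)) x0 = 0)
  (Hdec : forall x v, sing_sum J x v = INR N * dot (e phi) v / dot (perp (e phi)) x + sing_sum K x v)
  (HJ : forall p, In p J -> fst p = phi \/ In p K).

Notation fix_op := (fix_op phi x0 N K (INR n - 1) H).
Notation curve := (curve phi x0).

Lemma curve_solves_ode d M r b : d <= m / 4 -> M * d <= 1/2 -> cont_bounded d M b -> r <= d ->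
  (forall t, Rabs t < r -> fix_op b t = b t) ->
  forall s, 0 < Rabs s < r ->
    (forall p, In p J -> dot (perp (e (fst p))) (curve b s) <> 0) /\
    dot (perp (dcurve (dcurve (curve b)) s)) (dcurve (curve b) s) + sing_sum J (curve b s) (dcurve (curve b) s)
      = (INR n - 1) * H s.
Proof.
  intros Hdm HMd Hb Hr Hfix s [Hs0 Hs].
  assert (Hsn : s <> 0) by (intro Z; rewrite Z, Rabs_R0 in Hs0; lra).
  assert (HA := cos_avg_ge_half d M b s Hb ltac:(lra) HMd).
  split.
  - intros p Hp; destruct (HJ p Hp) as [E|Hin].
    + rewrite E, (perp_dot_curve _ _ d M) by (auto; lra).
      intro Z; apply Rmult_integral in Z; destruct Z; lra.
    + intro Z; assert (A : m / 2 <= Rabs (dot (perp (e (fst p))) (curve b s)))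
        by (eapply perp_dot_curve_lower_bound; eauto; lra).
      rewrite Z, Rabs_R0 in A; lra.
  - rewrite (ddcurve_curve phi x0 N K (INR n - 1) H m d M r b) by (auto; lra).
    rewrite (dcurve_curve _ _ d M) by (auto; lra).
    rewrite perp_dot_normal, Hdec, (perp_dot_curve _ _ d M), dot_e_angle by (auto; lra).
    unfold angle_speed, rhs, defect, sin_quot, regular_part; destruct (Req_EM_T s 0) as [Z|_]; [lra|].
    field; split; lra.
Qed.

Lemma fix_op_contracts d M : d <= m / 4 -> d <= 1 -> M * d <= 1/2 ->
  (INR N * 7 * M + lip_const K m) * d <= 1/2 ->
  forall b1 b2 D, cont_bounded d M b1 -> cont_bounded d M b2 ->
  close_on d D b1 b2 -> close_on d (D / 2) (fix_op b1) (fix_op b2).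
Proof.
  intros Hdm Hd1 HMd Hcon b1 b2 D H1 H2 HD t Ht.
  eapply Rle_trans; [apply (fix_op_lipschitz phi x0 N K _ H m d M Hm HK Hdm Hd1 HMd HHc b1 b2 D); auto|].
  assert (HD0 := close_on_nonneg d D b1 b2 t HD Ht); nra.
Qed.

Lemma local_solution_exists :
  exists eps x, is_local_solution J n H eps x /\ x 0 = x0 /\ dcurve x 0 = e (phi + PI / 2).
Proof.
  destruct (bounded_on_unit_interval H HHc) as [Hmax HHb].
  assert (HHb0 : 0 <= Hmax) by (eapply Rle_trans; [apply Rabs_pos | apply (HHb 0)]; rewrite Rabs_R0; lra).
  set (Gm := sum_mult K * (4 / m) + Rabs (INR n - 1) * Hmax).
  assert (HGm : 0 <= Gm).
  { assert (0 <= sum_mult K * (4 / m))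
      by (apply Rmult_le_pos; [apply sum_mult_nonneg | left; apply Rdiv_lt_0_compat; lra]).
    assert (0 <= Rabs (INR n - 1) * Hmax) by (apply Rmult_le_pos; auto; apply Rabs_pos).
    unfold Gm; lra. }
  set (M := Gm + 1).
  destruct (exists_small_radius m M (lip_const K m) N Hm ltac:(unfold M; lra) (lip_const_nonneg K m Hm))
    as [d [Hd0 [Hd1 [Hdm [HMd [HNM Hcon]]]]]].
  destruct (contraction_fixed_point d M fix_op) as [b [Hb Hfix]]; [ | | unfold M; lra |].
  - apply fix_op_contracts; auto.
  - intros b Hb t Ht; split; [apply (continuous_fix_op phi x0 N K _ H m d M); auto|].
    eapply Rle_trans; [apply (Rabs_fix_op_le phi x0 N K _ H m d M); auto|].
    fold Gm; unfold M in *; nra.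
  - exists d, (curve b); split; [|split].
    + split; [exact Hd0|]; split;
        [exact (C2_on_curve phi x0 N K (INR n - 1) H m d M d b Hm HK Hdm HMd HHc Hb (Rle_refl d) Hfix)|].
      split; [|exact (curve_solves_ode d M d b Hdm HMd Hb (Rle_refl d) Hfix)].
      intros s Hs; rewrite (dcurve_curve _ _ d M) by auto; unfold dot, e; simpl.
      assert (A := sin_cos_pow2 (angle phi b s)); simpl in A; lra.
    + unfold curve; rewrite !RInt_point; destruct x0; simpl; unfold zero; simpl; f_equal; ring.
    + rewrite (dcurve_curve _ _ d M) by (auto; rewrite Rabs_R0; lra); unfold angle, dev; f_equal; ring.
Qed.

Hypothesis HN : (1 <= N)%nat.

Section SolutionAngle.
Variables (eps : R) (x : R -> pt).
Hypotheses (Hsol : is_local_solution J n H eps x) (Hx0 : x 0 = x0)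
  (Hdx0 : dcurve x 0 = e (phi + PI / 2)).

Definition vel1 (s : R) : R := fst (dcurve x s).
Definition vel2 (s : R) : R := snd (dcurve x s).
Definition along (s : R) : R := dot (perp (e phi)) (dcurve x s).
Definition across (s : R) : R := - dot (e phi) (dcurve x s).
(** The angle of [x'] relative to [x'(0) = e(phi)^perp], well defined while [along > 0]. *)
Definition sol_dev (s : R) : R := atan (across s / along s).
Definition sol_b (s : R) : R := if Req_EM_T s 0 then Derive sol_dev 0 else sol_dev s / s.

Lemma ex_derive_sol s : Rabs s < eps ->
  ex_derive (fun u => fst (x u)) s /\ ex_derive (fun u => snd (x u)) s /\
  ex_derive vel1 s /\ ex_derive vel2 s.
Proof.
  intros Hs; destruct Hsol as [_ [HC _]]; destruct (HC s Hs) as [A [B [C [D _]]]]; repeat split; auto.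
Qed.

Lemma continuous_vel1 s : Rabs s < eps -> continuous vel1 s.
Proof. intros; apply (@ex_derive_continuous R_AbsRing R_NormedModule), ex_derive_sol; auto. Qed.

Lemma continuous_vel2 s : Rabs s < eps -> continuous vel2 s.
Proof. intros; apply (@ex_derive_continuous R_AbsRing R_NormedModule), ex_derive_sol; auto. Qed.

Lemma is_derive_along s : Rabs s < eps ->
  is_derive along s (- sin phi * Derive vel1 s + cos phi * Derive vel2 s).
Proof.
  intros Hs; unfold along, dot; simpl.
  apply is_derive_Rplus; apply is_derive_scal, Derive_correct, ex_derive_sol; auto.
Qed.

Lemma is_derive_across s : Rabs s < eps ->
  is_derive across s (- (cos phi * Derive vel1 s + sin phi * Derive vel2 s)).
Proof.
  intros Hs; unfold across, dot; simpl.
  apply is_derive_Ropp, is_derive_Rplus; apply is_derive_scal, Derive_correct, ex_derive_sol; auto.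
Qed.

Lemma along_0 : along 0 = 1.
Proof. unfold along; rewrite Hdx0, <- (Rplus_0_r (phi + PI / 2)), perp_dot_rotated; apply cos_0. Qed.

Lemma across_0 : across 0 = 0.
Proof. unfold across; rewrite Hdx0, <- (Rplus_0_r (phi + PI / 2)), dot_rotated, sin_0; ring. Qed.

Lemma along_across_unit s : Rabs s < eps -> along s ^ 2 + across s ^ 2 = 1.
Proof.
  intros Hs; destruct Hsol as [_ [_ [HU _]]]; assert (A := HU s Hs).
  unfold along, across; destruct (dcurve x s) as [a b]; unfold dot, perp, e in *; simpl in *.
  transitivity ((sin phi ^ 2 + cos phi ^ 2) * (a * a + b * b)); [ring|].
  rewrite sin_cos_pow2, A; ring.
Qed.

Lemma exists_along_gt_half : exists r1, 0 < r1 /\ r1 <= eps /\ forall s, Rabs s < r1 -> 1/2 < along s.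
Proof.
  assert (He : 0 < eps) by apply Hsol.
  assert (Hc : continuous along 0)
    by (apply (@ex_derive_continuous R_AbsRing R_NormedModule); eexists;
        apply is_derive_along; rewrite Rabs_R0; lra).
  destruct (continuous_eps_delta along 0 Hc (1/4)) as [d [Hd A]]; [lra|].
  exists (Rmin d eps); split; [apply Rmin_pos; auto|]; split; [apply Rmin_r|].
  intros s Hs; assert (B := A s ltac:(rewrite Rminus_0_r; assert (Z := Rmin_l d eps); lra)).
  rewrite along_0 in B; apply Rabs_le_between in B; lra.
Qed.

Lemma sol_dev_0 : sol_dev 0 = 0.
Proof. unfold sol_dev; rewrite across_0, along_0, Rdiv_0_l; apply atan_0. Qed.

Lemma dev_sol_b s : dev sol_b s = sol_dev s.
Proof. unfold dev, sol_b; destruct (Req_EM_T s 0) as [->|Hs]; [rewrite sol_dev_0; ring | field; auto]. Qed.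

Section NearZero.
Variable r1 : R.
Hypotheses (Hr1e : r1 <= eps) (Hpp : forall s, Rabs s < r1 -> 1/2 < along s).

Lemma dcurve_sol s : Rabs s < r1 -> dcurve x s = e (phi + PI / 2 + sol_dev s).
Proof.
  intros Hs; assert (Hp := Hpp s Hs).
  destruct (cos_sin_atan_div (along s) (across s)) as [Ec Es]; [lra | apply along_across_unit; lra|].
  fold (sol_dev s) in Ec, Es; unfold e.
  replace (phi + PI / 2 + sol_dev s) with ((phi + sol_dev s) + PI / 2) by ring.
  rewrite (cos_plus (phi + sol_dev s)), (sin_plus (phi + sol_dev s)), cos_PI2, sin_PI2,
    (cos_plus phi (sol_dev s)), (sin_plus phi (sol_dev s)), Ec, Es.
  unfold along, across, dot, perp, e; destruct (dcurve x s) as [a b]; simpl.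
  assert (Hsc := sin_cos_pow2 phi).
  f_equal; [transitivity ((sin phi ^ 2 + cos phi ^ 2) * a) | transitivity ((sin phi ^ 2 + cos phi ^ 2) * b)];
    try (rewrite Hsc; ring); ring.
Qed.

Lemma is_derive_sol_dev s : Rabs s < r1 -> is_derive sol_dev s (Derive sol_dev s).
Proof.
  intros Hs; apply Derive_correct; eexists; apply is_derive_atan_comp, is_derive_div;
    [apply is_derive_across; lra | apply is_derive_along; lra | assert (Hp := Hpp s Hs); lra].
Qed.

Lemma continuous_sol_b s : Rabs s < r1 -> continuous sol_b s.
Proof.
  intros Hs; destruct (Req_dec s 0) as [->|Hs0].
  - apply continuous_of_eps_delta; intros e0 He0.
    assert (D := is_derive_sol_dev 0 Hs); apply is_derive_Reals in D.
    destruct (D e0 He0) as [del Hdel]; exists del; split; [apply cond_pos|].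
    intros y Hy; rewrite Rminus_0_r in Hy.
    unfold sol_b; destruct (Req_EM_T 0 0) as [_|]; [|congruence].
    destruct (Req_EM_T y 0) as [->|Hy0]; [rewrite Rminus_eq_0, Rabs_R0; lra|].
    left; assert (A := Hdel y Hy0 Hy); rewrite Rplus_0_l, sol_dev_0, Rminus_0_r in A; exact A.
  - apply (continuous_ext_loc _ (fun y => sol_dev y / y)).
    + apply (locally_punctured s r1); auto; intros y Hy0 _.
      unfold sol_b; destruct (Req_EM_T y 0); [contradiction | reflexivity].
    + apply continuous_Rdiv; auto; [|apply continuous_id].
      apply (@ex_derive_continuous R_AbsRing R_NormedModule); eexists; apply is_derive_sol_dev; auto.
Qed.

Lemma curve_sol_b s : Rabs s < r1 -> curve sol_b s = x s.
Proof.
  intros Hs; unfold curve.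
  assert (Hang : forall t, Rabs t <= Rabs s -> dcurve x t = e (angle phi sol_b t))
    by (intros t Ht; rewrite dcurve_sol by lra; unfold angle; rewrite dev_sol_b; reflexivity).
  assert (E1 : RInt (fun t => cos (angle phi sol_b t)) 0 s = fst (x s) - fst (x 0)).
  { rewrite (RInt_ext _ (Derive (fun u => fst (x u))))
      by (intros t Ht; change (cos (angle phi sol_b t) = fst (dcurve x t));
          rewrite Hang by (apply Rabs_le_of_between_0; lra); reflexivity).
    apply RInt_0_Derive; intros t Ht; [apply ex_derive_sol; lra | apply continuous_vel1; lra]. }
  assert (E2 : RInt (fun t => sin (angle phi sol_b t)) 0 s = snd (x s) - snd (x 0)).
  { rewrite (RInt_ext _ (Derive (fun u => snd (x u))))
      by (intros t Ht; change (sin (angle phi sol_b t) = snd (dcurve x t));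
          rewrite Hang by (apply Rabs_le_of_between_0; lra); reflexivity).
    apply RInt_0_Derive; intros t Ht; [apply ex_derive_sol; lra | apply continuous_vel2; lra]. }
  rewrite E1, E2, Hx0; destruct (x s) as [a b], x0 as [a0 b0]; simpl; f_equal; ring.
Qed.

Lemma ddcurve_sol t : Rabs t < r1 -> dcurve (dcurve x) t =
  (- sin (phi + PI / 2 + sol_dev t) * Derive sol_dev t, cos (phi + PI / 2 + sol_dev t) * Derive sol_dev t).
Proof.
  intros Ht.
  assert (Hth : is_derive (fun u => phi + PI / 2 + sol_dev u) t (Derive sol_dev t))
    by (eapply is_derive_eq; [apply is_derive_Rplus; [apply is_derive_const | apply is_derive_sol_dev; auto]|];
        apply Rplus_0_l).
  unfold dcurve at 1; f_equal.
  - rewrite (Derive_ext_loc _ (fun u => cos (phi + PI / 2 + sol_dev u))).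
    + apply is_derive_unique, (is_derive_cos_comp (fun u => phi + PI / 2 + sol_dev u)), Hth.
    + apply (locally_interval t r1); auto; intros y Hy.
      change (fst (dcurve x y) = cos (phi + PI / 2 + sol_dev y)); rewrite dcurve_sol; auto.
  - rewrite (Derive_ext_loc _ (fun u => sin (phi + PI / 2 + sol_dev u))).
    + apply is_derive_unique, (is_derive_sin_comp (fun u => phi + PI / 2 + sol_dev u)), Hth.
    + apply (locally_interval t r1); auto; intros y Hy.
      change (snd (dcurve x y) = sin (phi + PI / 2 + sol_dev y)); rewrite dcurve_sol; auto.
Qed.

Lemma sol_dev_ode t : 0 < Rabs t < r1 ->
  Derive sol_dev t = INR N * (- sin (sol_dev t)) / dot (perp (e phi)) (x t)
                     + sing_sum K (x t) (dcurve x t) - (INR n - 1) * H t.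
Proof.
  intros [Ht0 Ht]; destruct Hsol as [_ [_ [_ Hode]]]; destruct (Hode t ltac:(lra)) as [_ E].
  rewrite (ddcurve_sol t Ht), Hdec in E; rewrite (dcurve_sol t Ht) in *.
  rewrite perp_dot_normal, dot_rotated in E; lra.
Qed.

Section Bounded.
Variables (r Mb : R).
Hypotheses (Hr : 0 < r) (Hrr1 : r <= r1) (Hrm : r <= m / 4) (HMr : Mb * r <= 1/2)
  (Hb : cont_bounded r Mb sol_b).

Let rh : R -> R := rhs phi x0 N K (INR n - 1) H sol_b.

(** This is where the differential equation is used. *)
Lemma is_derive_monomial_mul_sol_dev t : Rabs t < r ->
  is_derive (fun t => t ^ N * sol_dev t) t (t ^ N * rh t).
Proof.
  intros Ht; eapply is_derive_eq;
    [apply is_derive_Rmult; [apply is_derive_monomial | apply is_derive_sol_dev; lra]|].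
  destruct (Req_dec t 0) as [->|Ht0].
  - rewrite sol_dev_0; destruct N as [|k]; [lia|]; simpl; ring.
  - rewrite sol_dev_ode by (split; [apply Rabs_pos_lt; auto | lra]).
    rewrite <- (curve_sol_b t) by lra.
    rewrite (perp_dot_curve phi x0 r Mb sol_b t Hb Ht H0).
    assert (HA := cos_avg_ge_half r Mb sol_b t Hb Ht HMr).
    assert (Ebx : sol_b t = sol_dev t / t) by (unfold sol_b; destruct (Req_EM_T t 0); [lra | auto]).
    assert (Hth : e (angle phi sol_b t) = dcurve x t)
      by (rewrite dcurve_sol by lra; unfold angle; rewrite dev_sol_b; auto).
    unfold rh, rhs, defect, sin_quot, regular_part; destruct (Req_EM_T t 0) as [Z|_]; [lra|].
    rewrite dev_sol_b, Ebx, Hth, (curve_sol_b t) by lra.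
    destruct N as [|k]; [lia|]; simpl pred; simpl pow; field; split; lra.
Qed.

Lemma RInt_monomial_mul_rhs s : Rabs s < r -> RInt (fun t => t ^ N * rh t) 0 s = s ^ N * sol_dev s.
Proof.
  intros Hs; apply is_RInt_unique.
  replace (s ^ N * sol_dev s) with (minus (s ^ N * sol_dev s) (0 ^ N * sol_dev 0))
    by (rewrite sol_dev_0; unfold minus, plus, opp; simpl; ring).
  apply (is_RInt_derive (fun t => t ^ N * sol_dev t)); intros t Ht;
    assert (Hts := Rabs_le_of_between_0 s t Ht).
  - apply is_derive_monomial_mul_sol_dev; lra.
  - apply continuous_Rmult; [apply continuous_monomial|].
    apply (continuous_rhs phi x0 N K (INR n - 1) H m r Mb); auto; lra.
Qed.

Lemma sol_b_fixed s : Rabs s < r -> fix_op sol_b s = sol_b s.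
Proof.
  intros Hs; destruct (Req_dec s 0) as [->|Hs0].
  - apply (continuous_eq_at_0 _ _ r); auto.
    + apply (continuous_fix_op phi x0 N K (INR n - 1) H m r Mb); auto; lra.
    + apply Hb; auto.
    + intros y [Hy0 Hy]; assert (Hyn : y <> 0) by (intro Z; rewrite Z, Rabs_R0 in Hy0; lra).
      unfold fix_op, wavg, sol_b; destruct (Req_EM_T y 0) as [Z|_]; [lra|].
      fold rh; rewrite RInt_monomial_mul_rhs by auto; simpl; field; split; auto; apply pow_nonzero; auto.
  - unfold fix_op, wavg, sol_b; destruct (Req_EM_T s 0) as [Z|_]; [lra|].
    fold rh; rewrite RInt_monomial_mul_rhs by auto; simpl; field; split; auto; apply pow_nonzero; auto.
Qed.

End Bounded.
End NearZero.
End SolutionAngle.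

Lemma sol_b_near_0 eps x : is_local_solution J n H eps x -> dcurve x 0 = e (phi + PI / 2) ->
  exists r1, 0 < r1 /\ r1 <= eps /\ (forall s, Rabs s < r1 -> 1/2 < along x s) /\
    cont_bounded r1 (Rabs (sol_b x 0) + 1) (sol_b x).
Proof.
  intros Hsol Hdx; destruct (exists_along_gt_half eps x Hsol Hdx) as [r0 [Hr0 [Hr0e Hpp]]].
  assert (Hc0 := continuous_sol_b eps x Hsol Hdx r0 Hr0e Hpp 0 ltac:(rewrite Rabs_R0; lra)).
  destruct (continuous_eps_delta _ 0 Hc0 1) as [del [Hdel A]]; [lra|].
  exists (Rmin r0 del); assert (Hm1 := Rmin_l r0 del); assert (Hm2 := Rmin_r r0 del).
  split; [apply Rmin_pos; auto|]; split; [lra|]; split; [intros; apply Hpp; lra|].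
  intros s Hs; split; [apply (continuous_sol_b eps x Hsol Hdx r0 Hr0e Hpp); lra|].
  assert (B := A s ltac:(rewrite Rminus_0_r; lra)).
  replace (sol_b x s) with ((sol_b x s - sol_b x 0) + sol_b x 0) by ring.
  eapply Rle_trans; [apply Rabs_triang | lra].
Qed.

Lemma local_solution_unique eps1 eps2 x y :
  is_local_solution J n H eps1 x -> x 0 = x0 -> dcurve x 0 = e (phi + PI / 2) ->
  is_local_solution J n H eps2 y -> y 0 = x0 -> dcurve y 0 = e (phi + PI / 2) ->
  exists delta, 0 < delta /\ forall s, Rabs s < delta -> x s = y s.
Proof.
  intros Hsx Hx0 Hdx Hsy Hy0 Hdy.
  destruct (sol_b_near_0 eps1 x Hsx Hdx) as [rx [Hrx [Hrxe [Hppx Bx]]]].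
  destruct (sol_b_near_0 eps2 y Hsy Hdy) as [ry [Hry [Hrye [Hppy By]]]].
  set (Mb := Rabs (sol_b x 0) + Rabs (sol_b y 0) + 1).
  assert (HMb : 0 <= Mb)
    by (unfold Mb; assert (Z1 := Rabs_pos (sol_b x 0)); assert (Z2 := Rabs_pos (sol_b y 0)); lra).
  destruct (exists_small_radius m Mb (lip_const K m) N Hm HMb (lip_const_nonneg K m Hm))
    as [d [Hd0 [Hd1 [Hdm [HMd [_ Hcon]]]]]].
  set (r := Rmin (Rmin rx ry) d).
  assert (Hr0 : 0 < r) by (unfold r; repeat apply Rmin_pos; auto).
  assert (Hrd : r <= d) by apply Rmin_r.
  assert (Hrx' : r <= rx) by (unfold r; eapply Rle_trans; apply Rmin_l).
  assert (Hry' : r <= ry) by (unfold r; eapply Rle_trans; [apply Rmin_l | apply Rmin_r]).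
  assert (HMr : Mb * r <= 1 / 2) by (assert (Mb * r <= Mb * d) by (apply Rmult_le_compat_l; auto); lra).
  assert (SX : cont_bounded r Mb (sol_b x)).
  { intros t Ht; destruct (Bx t ltac:(lra)) as [C B]; split; auto.
    unfold Mb; assert (Z := Rabs_pos (sol_b y 0)); lra. }
  assert (SY : cont_bounded r Mb (sol_b y)).
  { intros t Ht; destruct (By t ltac:(lra)) as [C B]; split; auto.
    unfold Mb; assert (Z := Rabs_pos (sol_b x 0)); lra. }
  assert (EQ : forall s, Rabs s < r -> sol_b x s = sol_b y s).
  { apply (contraction_fixed_point_unique r Mb fix_op); auto.
    - apply fix_op_contracts; try lra.
      apply Rle_trans with ((INR N * 7 * Mb + lip_const K m) * d); auto.
      apply Rmult_le_compat_l; auto.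
      assert (0 <= INR N * 7 * Mb) by (assert (Z := pos_INR N); repeat apply Rmult_le_pos; lra).
      assert (Z := lip_const_nonneg K m Hm); lra.
    - apply (sol_b_fixed eps1 x Hsx Hx0 Hdx rx Hrxe Hppx r Mb); auto; lra.
    - apply (sol_b_fixed eps2 y Hsy Hy0 Hdy ry Hrye Hppy r Mb); auto; lra. }
  exists r; split; auto; intros s Hs.
  rewrite <- (curve_sol_b eps1 x Hsx Hx0 Hdx rx Hrxe Hppx s),
    <- (curve_sol_b eps2 y Hsy Hy0 Hdy ry Hrye Hppy s) by lra.
  apply curve_ext; intros t Ht; apply EQ; lra.
Qed.

End Decomposition.

Definition remove_nth {A} (i : nat) (J : list A) : list A := firstn i J ++ skipn (S i) J.

Lemma split_nth {A} (J : list A) i d : (i < length J)%nat -> J = firstn i J ++ nth i J d :: skipn (S i) J.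
Proof.
  revert i; induction J as [|a J IH]; intros i Hi; simpl in Hi; [lia|].
  destruct i as [|i]; simpl; [reflexivity | f_equal; apply IH; lia].
Qed.

Lemma In_remove_nth {A} (J : list A) i d p : In p (remove_nth i J) ->
  exists j, (j < length J)%nat /\ j <> i /\ nth j J d = p.
Proof.
  unfold remove_nth; revert i; induction J as [|a J IH]; intros i Hp; [destruct i; simpl in Hp; contradiction|].
  destruct i as [|i]; simpl in Hp.
  - destruct (In_nth J p d Hp) as [k [Hk Ek]]; exists (S k); simpl; repeat split; auto; lia.
  - destruct Hp as [<-|Hp]; [exists 0%nat; simpl; repeat split; auto; lia|].
    destruct (IH i Hp) as [j [Hj [Hji Ej]]]; exists (S j); simpl; repeat split; auto; lia.
Qed.

Lemma In_remove_nth_or {A} (J : list A) i d p : (i < length J)%nat -> In p J ->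
  p = nth i J d \/ In p (remove_nth i J).
Proof.
  intros Hi Hp; rewrite (split_nth J i d Hi) in Hp; unfold remove_nth.
  apply in_app_or in Hp; destruct Hp as [Hp|[<-|Hp]]; auto; right; apply in_or_app; auto.
Qed.

Lemma sing_sum_app l1 l2 x v : sing_sum (l1 ++ l2) x v = sing_sum l1 x v + sing_sum l2 x v.
Proof.
  induction l1 as [|p l1 IH]; simpl; [ring|].
  fold (sing_sum (l1 ++ l2) x v) (sing_sum l1 x v); rewrite IH; ring.
Qed.

Lemma sing_sum_remove_nth J i x v : (i < length J)%nat ->
  sing_sum J x v = INR (snd (nth i J (0, 0%nat))) * dot (e (fst (nth i J (0, 0%nat)))) v
                     / dot (perp (e (fst (nth i J (0, 0%nat))))) x
                   + sing_sum (remove_nth i J) x v.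
Proof.
  intros Hi; rewrite (split_nth J i (0, 0%nat) Hi) at 1; unfold remove_nth; rewrite !sing_sum_app; simpl.
  fold (sing_sum (skipn (S i) J) x v); ring.
Qed.

Lemma sin_neq_0 d : 0 < Rabs d < PI -> sin d <> 0.
Proof.
  intros [H1 H2]; unfold Rabs in *; destruct (Rcase_abs d).
  - assert (sin (- d) > 0) by (apply sin_gt_0; lra); rewrite sin_neg in H; lra.
  - assert (sin d > 0) by (apply sin_gt_0; lra); lra.
Qed.

Ltac solve_angle_gap := let HPI := fresh in
  assert (HPI := PI_RGT_0); unfold Rabs; destruct Rcase_abs; split; lra.

Lemma type_data_facts (J : list (R * nat)) n : type_data J n ->
  (forall i, (i < length J)%nat -> (1 <= snd (nth i J (0%R, 0%nat)))%nat) /\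
  (forall i j, (i < length J)%nat -> (j < length J)%nat -> i <> j ->
     0 < Rabs (fst (nth i J (0, 0%nat)) - fst (nth j J (0, 0%nat))) < PI).
Proof.
  intros HT; destruct HT as [n' Hn | l m' Hl Hm | c Hc | k l Hkl | c Hc].
  - split; intros; simpl in *.
    + destruct i as [|i]; simpl; lia.
    + destruct i as [|[|i]]; destruct j as [|[|j]]; simpl in *; lia.
  - split; intros; simpl in *.
    + destruct i as [|[|i]]; simpl; lia.
    + destruct i as [|[|i]]; destruct j as [|[|j]]; simpl in *; try lia; solve_angle_gap.
  - split; intros; simpl in *.
    + destruct i as [|[|[|i]]]; simpl; lia.
    + destruct i as [|[|[|i]]]; destruct j as [|[|[|j]]]; simpl in *; try lia; solve_angle_gap.
  - assert (Hk : (1 <= k)%nat /\ (1 <= l)%nat)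
      by (destruct Hkl as [[-> ->]|[[-> ->]|[[-> ->]|[m0 [Hk1 [[_ ->]|[[_ ->]|[_ ->]]]]]]]]; lia).
    split; intros; simpl in *.
    + destruct i as [|[|[|[|i]]]]; simpl; lia.
    + destruct i as [|[|[|[|i]]]]; destruct j as [|[|[|[|j]]]]; simpl in *; try lia; solve_angle_gap.
  - split; intros; simpl in *.
    + destruct i as [|[|[|[|[|[|i]]]]]]; simpl; lia.
    + destruct i as [|[|[|[|[|[|i]]]]]]; destruct j as [|[|[|[|[|[|j]]]]]]; simpl in *; try lia; solve_angle_gap.
Qed.

Lemma other_lines_avoid_x0 J n i x0 : type_data J n -> (i < length J)%nat ->
  dot (perp (e (fst (nth i J (0, 0%nat))))) x0 = 0 -> x0 <> (0, 0) ->
  forall q, In q (remove_nth i J) -> dot (perp (e (fst q))) x0 <> 0.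
Proof.
  intros HT Hi H0 Hne q Hq; destruct (type_data_facts J n HT) as [_ Hdist].
  destruct (In_remove_nth J i (0, 0%nat) q Hq) as [j [Hj [Hji Ej]]].
  rewrite (perp_dot_through_line _ x0 (fst q) H0); intro Z; apply Rmult_integral in Z; destruct Z as [Z|Z].
  - exact (dot_e_on_line_neq_0 _ x0 H0 Hne Z).
  - apply (sin_neq_0 (fst (nth i J (0, 0%nat)) - fst q)); auto; rewrite <- Ej; apply Hdist; auto.
Qed.

Theorem proposition3p2 :
  forall (J : list (R * nat)) (n : nat), type_data J n ->
  forall H : R -> R, (forall t, continuous H t) ->
  forall (i : nat), (i < length J)%nat ->
  forall x0 : R * R,
    dot (perp (e (fst (nth i J (0, 0%nat))))) x0 = 0 -> x0 <> (0, 0) ->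
    (exists (eps : R) (x : R -> R * R), is_local_solution J n H eps x /\ x 0 = x0 /\
        dcurve x 0 = e (fst (nth i J (0, 0%nat)) + PI / 2)) /\
    (forall (eps1 eps2 : R) (x y : R -> R * R),
        is_local_solution J n H eps1 x -> x 0 = x0 ->
        dcurve x 0 = e (fst (nth i J (0, 0%nat)) + PI / 2) ->
        is_local_solution J n H eps2 y -> y 0 = x0 ->
        dcurve y 0 = e (fst (nth i J (0, 0%nat)) + PI / 2) ->
        exists delta, 0 < delta /\ forall s, Rabs s < delta -> x s = y s).
Proof.
  intros J n HT H HHc i Hi x0 H0 Hne.
  destruct (type_data_facts J n HT) as [HN _].
  set (K := remove_nth i J).
  destruct (exists_away_from_lines K x0 (other_lines_avoid_x0 J n i x0 HT Hi H0 Hne)) as [m [Hm HK]].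
  assert (Hdec := fun x v => sing_sum_remove_nth J i x v Hi).
  assert (HJ : forall p, In p J -> fst p = fst (nth i J (0, 0%nat)) \/ In p K)
    by (intros p Hp; destruct (In_remove_nth_or J i (0, 0%nat) p Hi Hp) as [->|]; auto).
  split.
  - exact (local_solution_exists J K _ x0 _ n H m Hm HK HHc H0 Hdec HJ).
  - exact (local_solution_unique J K _ x0 _ n H m Hm HK HHc H0 Hdec (HN i Hi)).
Qed.
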